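(* Let $f\in C^\infty(\mathbb{R}_+^2\setminus\{(0,0)\})$ be homogeneous of order $\alpha\in\mathbb{C}$, and let $d_{\alpha+1}$ be as defined in the context. 1. If $\alpha+2\ne0$ and $b>0$, then $$\operatorname{LIM}_{z\to\infty}z^{\alpha+2}\operatorname{reg\,}\int_{b/z}^\infty f(1,y)\,dy=-\frac{d_{\alpha+1}}{\alpha+2}b^{\alpha+2},\qquad \operatorname{LIM}_{z\to0}z^{\alpha+2}\operatorname{reg\,}\int_{b/z}^\infty f(1,y)\,dy=0.$$ 2. If $\alpha=-2$ and $b>0$, then the regularized limits of $\log z\cdot\operatorname{reg\,}\int_{b/z}^\infty f(1,y)\,dy$ as $z\to0$ and as $z\to\infty$ both vanish.
   Context: $\mathbb{R}_+=[0,\infty)$. Homogeneous of order $\alpha$: $f(tx,ty)=t^\alpha f(x,y)$ for $t>0$. Taylor expansion gives $f(x,y)=y^\alpha f(x/y,1)\sim\sum_{j\ge0}c_jy^{\alpha-j}x^j$ as $y\to\infty$ ($x$ bounded), and $f(x,y)=x^\alpha f(1,y/x)\sim\sum_{j\ge0}d_jx^{\alpha-j}y^j$ as $x\to\infty$ ($y$ bounded), i.e. $c_j=\frac{1}{j!}\partial_1^jf(0,1)$, $d_j=\frac1{j!}\partial_2^jf(1,0)$; if $\alpha+1\notin\mathbb{Z}_{\ge0}$ one sets $c_{\alpha+1}=d_{\alpha+1}=0$. Regularized limit: if $g$ has an asymptotic expansion (as $x\to\infty$ or $x\to0$) $\sum_j\sum_kb_{jk}x^{\beta_j}\log^kx+\sum_kb_{0k}\log^kx+o(1)$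 with finitely many $\beta_j\in\mathbb{C}\setminus\{0\}$, then $\operatorname{LIM}g:=b_{00}$. Regularized integral: $\operatorname{reg\,}\int_c^\infty g:=\operatorname{LIM}_{R\to\infty}\int_c^Rg$ for $c>0$. *)

From Stdlib Require Import Reals List ClassicalEpsilon Factorial.
From Coquelicot Require Import Coquelicot.
Open Scope R_scope.

Definition is_derive_C (g : R -> C) (x : R) (l : C) : Prop :=
  is_derive (fun t => Re (g t)) x (Re l) /\ is_derive (fun t => Im (g t)) x (Im l).

Definition RInt_C (g : R -> C) (a b : R) : C :=
  (RInt (fun t => Re (g t)) a b, RInt (fun t => Im (g t)) a b).

(* complex power x^beta for x > 0 : exp(beta * ln x) *)
Definition cpow (x : R) (beta : C) : C :=
  (exp (Re beta * ln x) * cos (Im beta * ln x),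
   exp (Re beta * ln x) * sin (Im beta * ln x)).

Definition quad (p : R * R) : Prop :=
  0 <= fst p /\ 0 <= snd p /\ p <> (0, 0).

(* F is C^infty on the open set U of R^2: there is a family Dd i j (playing the
   role of d_x^i d_y^j F), with Dd 0 0 = F on U, each Dd i j jointly continuous on U,
   and d_x (Dd i j) = Dd (i+1) j, d_y (Dd i j) = Dd i (j+1) on U. *)
Definition smooth_open (U : R * R -> Prop) (F : R -> R -> C) : Prop :=
  open U /\
  exists Dd : nat -> nat -> R -> R -> C,
    (forall p, U p -> Dd 0%nat 0%nat (fst p) (snd p) = F (fst p) (snd p)) /\
    (forall i j p, U p ->
       continuous (fun q : R * R => Re (Dd i j (fst q) (snd q))) p /\
       continuous (fun q : R * R => Im (Dd i j (fst q) (snd q))) p /\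
       is_derive_C (fun t => Dd i j t (snd p)) (fst p) (Dd (S i) j (fst p) (snd p)) /\
       is_derive_C (fun t => Dd i j (fst p) t) (snd p) (Dd i (S j) (fst p) (snd p))).

(* f is C^infty on the (non-open) set D: it is the restriction to D of a function
   that is C^infty on an open neighbourhood of D (smoothness up to the boundary). *)
Definition smooth_on (D : R * R -> Prop) (f : R -> R -> C) : Prop :=
  exists (U : R * R -> Prop) (F : R -> R -> C),
    (forall p, D p -> U p) /\ smooth_open U F /\
    (forall p, D p -> F (fst p) (snd p) = f (fst p) (snd p)).

Definition homogeneous (alpha : C) (f : R -> R -> C) : Prop :=
  forall t x y, 0 < t -> quad (x, y) ->
    f (t * x) (t * y) = Cmult (cpow t alpha) (f x y).

(* right derivative at x (meaningful at the boundary point 0 of [0, oo)) *)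
Definition rderiv (g : R -> C) (x : R) : C :=
  epsilon (inhabits (RtoC 0)) (fun l : C =>
    filterlim (fun h => (Re (g (x + h)) - Re (g x)) / h) (at_right 0) (locally (Re l)) /\
    filterlim (fun h => (Im (g (x + h)) - Im (g x)) / h) (at_right 0) (locally (Im l))).

Fixpoint rderiv_n (n : nat) (g : R -> C) : R -> C :=
  match n with
  | O => g
  | S n => rderiv (rderiv_n n g)
  end.

Definition dcoef (f : R -> R -> C) (j : nat) : C :=
  Cdiv (rderiv_n j (fun y => f 1 y) 0) (RtoC (INR (fact j))).

(* d_{alpha+1}, set to 0 when alpha + 1 is not in Z_{>=0} *)
Definition d_alpha1 (f : R -> R -> C) (alpha : C) : C :=
  match excluded_middle_informative
          (exists j : nat, Cplus alpha (RtoC 1) = RtoC (INR j)) with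
  | left H => dcoef f (proj1_sig (constructive_indefinite_description _ H))
  | right _ => RtoC 0
  end.

(* the sum  sum_j sum_k b_jk x^beta_j log^k x , terms given as (beta, k, b) *)
Definition pow_log_sum (l : list (C * nat * C)) (x : R) : C :=
  fold_right (fun t acc =>
    Cplus acc (Cmult (snd t) (Cmult (cpow x (fst (fst t))) (RtoC (ln x ^ snd (fst t))))))
    (RtoC 0) l.

(* the sum  sum_k b_0k log^k x , terms given as (k, b) *)
Definition log_sum (m : list (nat * C)) (x : R) : C :=
  fold_right (fun t acc => Cplus acc (Cmult (snd t) (RtoC (ln x ^ fst t)))) (RtoC 0) m.

(* is_LIM F g c : along the filter F (x -> oo or x -> 0+), g has an asymptotic
   expansion  sum_j sum_k b_jk x^beta_j log^k x + sum_{k>=1} b_0k log^k x + c + o(1)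
   with finitely many beta_j in C \ {0}; i.e. LIM g = b_00 = c. *)
Definition is_LIM (F : (R -> Prop) -> Prop) (g : R -> C) (c : C) : Prop :=
  exists (l : list (C * nat * C)) (m : list (nat * C)),
    List.Forall (fun t => fst (fst t) <> RtoC 0) l /\
    List.Forall (fun t => (1 <= fst t)%nat) m /\
    filterlim (fun x => Cminus (Cminus (Cminus (g x) (pow_log_sum l x)) (log_sum m x)) c)
      F (locally (RtoC 0)).

(* LIM_{x -> oo} g as a value (the unique c with is_LIM, when it exists) *)
Definition LIM_infty (g : R -> C) : C :=
  epsilon (inhabits (RtoC 0)) (is_LIM (Rbar_locally p_infty) g).

Definition reg_int (g : R -> C) (c : R) : C :=
  LIM_infty (fun r => RInt_C g c r).

From Stdlib Require Import Reals Lra Lia List ClassicalEpsilon Factorial.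
From Coquelicot Require Import Coquelicot.
Open Scope R_scope.

(* Write [G j = d_y^j f(1,.)] and [H i = d_x^i f(.,1)]; both are smooth on a neighbourhood of
   [[0, oo)], and homogeneity gives [f(1,y) = y^alpha f(1/y,1)].  Integrating the Taylor expansion
   of [f(.,1)] at 0 term by term shows that [I(c) = int_1^c f(1,y) dy] equals
   [sum_(j<N) H_j(0)/j! psi_(alpha-j+1)(c) + K + O(c^(Re alpha - N + 1))] as [c -> oo], where
   [psi_beta(c) = c^beta/beta] ([ln c] if [beta = 0]); hence [reg int_c^oo f(1,.) = K - I(c)].
   As [z -> 0] one substitutes [c = b/z] in this expansion.  As [z -> oo] one writes
   [I(b/z) = I(0) + int_0^(b/z) f(1,.)] and Taylor-expands [f(1,.)] at 0: the terms become the
   powers [z^(alpha+1-j)], and the only constant one, [j = alpha + 1], produces [d_(alpha+1)].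
   That [LIM] is well defined, i.e. that an expansion determines its constant term, is the
   substantial ingredient; see [is_LIM_unique]. *)

Lemma C_ext (a b : C) : Re a = Re b -> Im a = Im b -> a = b.
Proof. destruct a, b; simpl; intros; subst; auto. Qed.

Lemma cpow_plus x b1 b2 : cpow x (Cplus b1 b2) = Cmult (cpow x b1) (cpow x b2).
Proof.
  unfold cpow; apply C_ext; unfold Re, Im; simpl;
  rewrite ?Rmult_plus_distr_r, exp_plus, ?cos_plus, ?sin_plus; ring.
Qed.

Lemma cpow_mult x y b : 0 < x -> 0 < y -> cpow (x*y) b = Cmult (cpow x b) (cpow y b).
Proof.
  intros; unfold cpow; rewrite ln_mult by auto; apply C_ext; unfold Re, Im; simpl;
  rewrite ?Rmult_plus_distr_l, exp_plus, ?cos_plus, ?sin_plus; ring.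
Qed.

Lemma cpow_0 x : cpow x (RtoC 0) = RtoC 1.
Proof. unfold cpow; apply C_ext; unfold Re, Im; simpl; rewrite ?Rmult_0_l, exp_0, ?cos_0, ?sin_0; ring. Qed.

Lemma cpow_1 x : 0 < x -> cpow x (RtoC 1) = RtoC x.
Proof. intros; unfold cpow; apply C_ext; unfold Re, Im; simpl; rewrite ?Rmult_0_l, ?cos_0, ?sin_0, ?Rmult_1_l, ?exp_ln; auto; ring. Qed.

Lemma cpow_nat x n : 0 < x -> cpow x (RtoC (INR n)) = RtoC (x ^ n).
Proof.
  intros Hx; induction n.
  - simpl. apply cpow_0.
  - rewrite S_INR. replace (RtoC (INR n + 1)) with (Cplus (RtoC (INR n)) (RtoC 1))
      by (apply C_ext; unfold Re, Im; simpl; ring).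
    rewrite cpow_plus, IHn, cpow_1 by auto. apply C_ext; unfold Re, Im; simpl; ring.
Qed.

Definition rpow (y t : R) : R := exp (t * ln y).

Lemma Cmod_cpow x b : Cmod (cpow x b) = rpow x (Re b).
Proof.
  unfold cpow, Cmod, rpow; simpl.
  set (E := exp (Re b * ln x)). set (t := Im b * ln x).
  pose proof (sin2_cos2 t) as H. unfold Rsqr in H.
  replace (E * cos t * (E * cos t * 1) + E * sin t * (E * sin t * 1)) with (E * E)
    by (transitivity (E*E*(sin t * sin t + cos t * cos t)); [rewrite H; ring | ring]).
  apply sqrt_square. left; apply exp_pos.
Qed.

Lemma is_derive_cpow_re x b : 0 < x ->
  is_derive (fun t => Re (cpow t b)) x (Re (Cmult (Cmult b (cpow x b)) (RtoC (/x)))).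
Proof.
  intros Hx. unfold cpow, Re, Im; simpl. auto_derive.
  - auto.
  - field. lra.
Qed.

Lemma is_derive_cpow_im x b : 0 < x ->
  is_derive (fun t => Im (cpow t b)) x (Im (Cmult (Cmult b (cpow x b)) (RtoC (/x)))).
Proof.
  intros Hx. unfold cpow, Re, Im; simpl. auto_derive.
  - auto.
  - field. lra.
Qed.

Lemma is_derive_C_cpow x b : 0 < x ->
  is_derive_C (fun t => cpow t b) x (Cmult (Cmult b (cpow x b)) (RtoC (/x))).
Proof. intros; split; [apply is_derive_cpow_re | apply is_derive_cpow_im]; auto. Qed.

Fixpoint csum (n : nat) (g : nat -> C) : C :=
  match n with O => RtoC 0 | S n => Cplus (csum n g) (g n) end.

Lemma csum_ext n g1 g2 : (forall i, (i < n)%nat -> g1 i = g2 i) -> csum n g1 = csum n g2.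
Proof.
  induction n; simpl; intros; auto. rewrite IHn, H; auto.
Qed.

Lemma csum_plus n g1 g2 : csum n (fun i => Cplus (g1 i) (g2 i)) = Cplus (csum n g1) (csum n g2).
Proof. induction n; simpl. apply C_ext; unfold Re, Im; simpl; ring. rewrite IHn. ring. Qed.

Lemma csum_scal n a g : csum n (fun i => Cmult a (g i)) = Cmult a (csum n g).
Proof. induction n; simpl. apply C_ext; unfold Re, Im; simpl; ring. rewrite IHn. ring. Qed.

Lemma csum_shift n g : csum (S n) g = Cplus (g O) (csum n (fun i => g (S i))).
Proof.
  induction n; simpl. ring. simpl in IHn. rewrite IHn. ring.
Qed.

Lemma csum_zero n : csum n (fun _ => RtoC 0) = RtoC 0.
Proof. induction n; simpl; auto. rewrite IHn; ring. Qed.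

Lemma csum_single n j (a : nat -> C) (P : nat -> Prop) (dec : forall i, {P i} + {~ P i}) :
  (forall i, P i -> i = j) ->
  csum n (fun i => if dec i then a i else RtoC 0) =
  if dec j then (if Nat.ltb j n then a j else RtoC 0) else RtoC 0.
Proof.
  intros Huniq. induction n; simpl.
  - destruct (dec j); auto.
  - rewrite IHn. destruct (dec n) as [Hn|Hn].
    + pose proof (Huniq _ Hn) as E; subst j. destruct (dec n) as [_|Hn']; [|contradiction].
      rewrite Nat.ltb_irrefl. replace (Nat.ltb n (S n)) with true. ring.
      symmetry; apply Nat.ltb_lt; lia.
    + destruct (dec j); [|ring].
      destruct (Nat.ltb j n) eqn:E1.
      * apply Nat.ltb_lt in E1. replace (Nat.ltb j (S n)) with true. ring.
        symmetry; apply Nat.ltb_lt; lia.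
      * apply Nat.ltb_ge in E1. destruct (Nat.eq_dec j n); [subst; contradiction|].
        replace (Nat.ltb j (S n)) with false. ring. symmetry; apply Nat.ltb_ge; lia.
Qed.

(** * Regularized limits *)

Definition tends0 (F : (R -> Prop) -> Prop) (g : R -> C) : Prop :=
  forall eps, 0 < eps -> F (fun x => Cmod (g x) < eps).

Lemma tends0_filterlim F {FF : Filter F} g : tends0 F g <-> filterlim g F (locally (RtoC 0)).
Proof.
  split.
  - intros H. apply filterlim_locally. intros eps.
    apply (filter_imp (fun x => Cmod (g x) < eps)); [|apply H, cond_pos].
    intros x Hx. apply C_NormedModule_mixin_compat1.
    replace (minus (g x) (RtoC 0)) with (g x); auto.
    apply C_ext; unfold minus, plus, opp; simpl; unfold Re, Im; simpl; ring.
  - intros H eps Heps.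
    assert (He2 : 0 < eps / 2) by lra.
    pose proof (proj1 (filterlim_locally g (RtoC 0)) H (mkposreal _ He2)) as H2.
    revert H2; apply filter_imp. intros x Hx.
    apply C_NormedModule_mixin_compat2 in Hx. simpl in Hx.
    replace (Cmod (minus (g x) _)) with (Cmod (g x)) in Hx.
    + assert (sqrt 2 < 2).
      { rewrite <- (sqrt_square 2) at 2 by lra. apply sqrt_lt_1_alt; lra. }
      assert (sqrt 2 * (eps/2) < eps) by nra. simpl in Hx. lra.
    + f_equal; apply C_ext; unfold minus, plus, opp; simpl; unfold Re, Im; simpl; ring.
Qed.

Lemma tends0_le F {FF : Filter F} (g : R -> C) (u : R -> R) :
  F (fun x => Cmod (g x) <= u x) -> (forall eps, 0 < eps -> F (fun x => u x < eps)) -> tends0 F g.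
Proof.
  intros H1 H2 eps Heps. apply (filter_imp (fun x => Cmod (g x) <= u x /\ u x < eps)).
  - intros x [A B]; lra.
  - apply filter_and; auto.
Qed.

Lemma tends0_plus F {FF : Filter F} g1 g2 : tends0 F g1 -> tends0 F g2 ->
  tends0 F (fun x => Cplus (g1 x) (g2 x)).
Proof.
  intros H1 H2 eps Heps.
  apply (filter_imp (fun x => Cmod (g1 x) < eps/2 /\ Cmod (g2 x) < eps/2)).
  - intros x [A B]. pose proof (Cmod_triangle (g1 x) (g2 x)). lra.
  - apply filter_and; [apply H1|apply H2]; lra.
Qed.

Lemma tends0_scal F {FF : Filter F} a g : tends0 F g -> tends0 F (fun x => Cmult a (g x)).
Proof.
  intros H eps Heps.
  apply (filter_imp (fun x => Cmod (g x) < eps / (Cmod a + 1))).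
  - intros x Hx. rewrite Cmod_mult. pose proof (Cmod_ge_0 a). pose proof (Cmod_ge_0 (g x)).
    assert (Cmod (g x) * (Cmod a + 1) < eps).
    { apply (Rmult_lt_compat_r (Cmod a + 1)) in Hx; [|lra].
      unfold Rdiv in Hx. rewrite Rmult_assoc, Rinv_l in Hx; lra. }
    nra.
  - apply H. apply Rdiv_lt_0_compat; auto. pose proof (Cmod_ge_0 a); lra.
Qed.

Lemma tends0_ext F {FF : Filter F} g1 g2 : F (fun x => g1 x = g2 x) -> tends0 F g1 -> tends0 F g2.
Proof.
  intros He H eps Heps. apply (filter_imp (fun x => g1 x = g2 x /\ Cmod (g1 x) < eps)).
  - intros x [A B]; rewrite <- A; auto.
  - apply filter_and; auto.
Qed.

Lemma tends0_zero F {FF : Filter F} : tends0 F (fun _ => RtoC 0).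
Proof. intros eps Heps. apply filter_forall. intros; rewrite Cmod_0; auto. Qed.

Definition is_LIM_Cmod F g c := exists (l : list (C * nat * C)) (m : list (nat * C)),
    List.Forall (fun t => fst (fst t) <> RtoC 0) l /\
    List.Forall (fun t => (1 <= fst t)%nat) m /\
    tends0 F (fun x => Cminus (Cminus (Cminus (g x) (pow_log_sum l x)) (log_sum m x)) c).

Lemma is_LIM_iff F {FF : Filter F} g c : is_LIM F g c <-> is_LIM_Cmod F g c.
Proof.
  unfold is_LIM, is_LIM_Cmod. split; intros (l & m & A & B & D); exists l, m; repeat split; auto;
  apply tends0_filterlim; auto.
Qed.

Lemma pow_log_sum_app l1 l2 x : pow_log_sum (l1 ++ l2) x = Cplus (pow_log_sum l1 x) (pow_log_sum l2 x).
Proof. induction l1; simpl. ring. unfold pow_log_sum in *; simpl. rewrite IHl1. ring. Qed.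

Lemma log_sum_app l1 l2 x : log_sum (l1 ++ l2) x = Cplus (log_sum l1 x) (log_sum l2 x).
Proof. induction l1; simpl. ring. unfold log_sum in *; simpl. rewrite IHl1. ring. Qed.

Lemma pow_log_sum_scal a l x : pow_log_sum (map (fun t => (fst t, Cmult a (snd t))) l) x = Cmult a (pow_log_sum l x).
Proof. induction l; simpl. ring. unfold pow_log_sum in *; simpl. rewrite IHl. ring. Qed.

Lemma log_sum_scal a l x : log_sum (map (fun t => (fst t, Cmult a (snd t))) l) x = Cmult a (log_sum l x).
Proof. induction l; simpl. ring. unfold log_sum in *; simpl. rewrite IHl. ring. Qed.

Section LIM.
Context (F : (R -> Prop) -> Prop) {FF : Filter F}.

Lemma is_LIM_of_tends0 g c : tends0 F (fun x => Cminus (g x) c) -> is_LIM F g c.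
Proof.
  intros H; apply is_LIM_iff; auto. exists nil, nil; repeat split; auto.
  revert H; apply tends0_ext; auto. apply filter_forall; intros x. unfold pow_log_sum, log_sum; simpl. ring.
Qed.

Lemma is_LIM_ext g1 g2 c : F (fun x => g1 x = g2 x) -> is_LIM F g1 c -> is_LIM F g2 c.
Proof.
  intros He H; apply is_LIM_iff in H; auto; apply is_LIM_iff; auto.
  destruct H as (l & m & A & B & D). exists l, m; repeat split; auto.
  revert D; apply tends0_ext; auto. revert He; apply filter_imp; intros x E; rewrite E; auto.
Qed.

Lemma is_LIM_plus g1 g2 c1 c2 : is_LIM F g1 c1 -> is_LIM F g2 c2 ->
  is_LIM F (fun x => Cplus (g1 x) (g2 x)) (Cplus c1 c2).
Proof.
  intros H1 H2; apply is_LIM_iff in H1; apply is_LIM_iff in H2; auto; apply is_LIM_iff; auto.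
  destruct H1 as (l1 & m1 & A1 & B1 & D1). destruct H2 as (l2 & m2 & A2 & B2 & D2).
  exists (l1 ++ l2), (m1 ++ m2); repeat split; try (apply Forall_app; auto).
  pose proof (tends0_plus F _ _ D1 D2) as D. revert D; apply tends0_ext; auto.
  apply filter_forall; intros x. rewrite pow_log_sum_app, log_sum_app. ring.
Qed.

Lemma is_LIM_scal a g c : is_LIM F g c -> is_LIM F (fun x => Cmult a (g x)) (Cmult a c).
Proof.
  intros H; apply is_LIM_iff in H; auto; apply is_LIM_iff; auto.
  destruct H as (l & m & A & B & D).
  exists (map (fun t => (fst t, Cmult a (snd t))) l), (map (fun t => (fst t, Cmult a (snd t))) m).
  repeat split.
  - apply Forall_map. revert A; apply Forall_impl; auto.
  - apply Forall_map. revert B; apply Forall_impl; auto.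
  - pose proof (tends0_scal F a _ D) as D'. revert D'; apply tends0_ext; auto.
    apply filter_forall; intros x. rewrite pow_log_sum_scal, log_sum_scal. ring.
Qed.

Lemma is_LIM_const c : is_LIM F (fun _ => c) c.
Proof. apply is_LIM_of_tends0. apply (tends0_ext F (fun _ => RtoC 0)); [|apply tends0_zero; auto].
  apply filter_forall; intros; ring. Qed.

Lemma is_LIM_pow_log_term b k a : b <> RtoC 0 ->
  is_LIM F (fun x => Cmult a (Cmult (cpow x b) (RtoC (ln x ^ k)))) (RtoC 0).
Proof.
  intros Hb. apply is_LIM_iff; auto. exists ((b, k, a) :: nil), nil. split; [constructor; auto|split; [constructor|]].
  - apply (tends0_ext F (fun _ => RtoC 0)); [|apply tends0_zero; auto]. apply filter_forall; intros x.
    unfold pow_log_sum, log_sum; simpl. ring.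
Qed.

Lemma is_LIM_log_term k a : (1 <= k)%nat ->
  is_LIM F (fun x => Cmult a (RtoC (ln x ^ k))) (RtoC 0).
Proof.
  intros Hk. apply is_LIM_iff; auto. exists nil, ((k, a) :: nil). split; [constructor|split; [constructor; auto|]].
  - apply (tends0_ext F (fun _ => RtoC 0)); [|apply tends0_zero; auto]. apply filter_forall; intros x.
    unfold pow_log_sum, log_sum; simpl. ring.
Qed.

Lemma is_LIM_csum n (g : nat -> R -> C) (c : nat -> C) :
  (forall j, (j < n)%nat -> is_LIM F (g j) (c j)) ->
  is_LIM F (fun x => csum n (fun j => g j x)) (csum n c).
Proof.
  induction n; intros H; simpl.
  - apply is_LIM_const.
  - apply is_LIM_plus; auto.
Qed.

End LIM.

(** * Uniqueness of regularized limits *)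

Definition log_poly (n : nat) (q : R -> C) : Prop :=
  exists a : nat -> C, forall x, 0 < x -> q x = csum n (fun i => Cmult (a i) (RtoC (ln x ^ i))).

Lemma log_poly_ext n q1 q2 : (forall x, 0 < x -> q1 x = q2 x) -> log_poly n q1 -> log_poly n q2.
Proof. intros E [a Ha]; exists a; intros; rewrite <- E; auto. Qed.

Lemma log_poly_zero n : log_poly n (fun _ => RtoC 0).
Proof.
  exists (fun _ => RtoC 0); intros.
  rewrite (csum_ext _ _ (fun _ => RtoC 0)); [rewrite csum_zero; auto|intros; simpl; ring].
Qed.

Lemma log_poly_plus n q1 q2 : log_poly n q1 -> log_poly n q2 -> log_poly n (fun x => Cplus (q1 x) (q2 x)).
Proof.
  intros [a1 H1] [a2 H2]. exists (fun i => Cplus (a1 i) (a2 i)); intros x Hx.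
  rewrite H1, H2, <- csum_plus by auto. apply csum_ext; intros; ring.
Qed.

Lemma log_poly_scal n c q : log_poly n q -> log_poly n (fun x => Cmult c (q x)).
Proof.
  intros [a H]. exists (fun i => Cmult c (a i)); intros x Hx.
  rewrite H, <- csum_scal by auto. apply csum_ext; intros; ring.
Qed.

Lemma log_poly_S n q : log_poly n q -> log_poly (S n) q.
Proof.
  intros [a H]. exists (fun i => if Compare_dec.lt_dec i n then a i else RtoC 0); intros x Hx.
  simpl. rewrite H by auto. destruct (Compare_dec.lt_dec n n); [lia|].
  rewrite Cmult_0_l, Cplus_0_r. apply csum_ext; intros i Hi. destruct (Compare_dec.lt_dec i n); auto; lia.
Qed.

Lemma log_poly_le n m q : (n <= m)%nat -> log_poly n q -> log_poly m q.
Proof. induction 1; auto. intros; apply log_poly_S; auto. Qed.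

Lemma log_poly_mul_ln n q : log_poly n q -> log_poly (S n) (fun x => Cmult (RtoC (ln x)) (q x)).
Proof.
  intros [a H]. exists (fun i => match i with O => RtoC 0 | S j => a j end); intros x Hx.
  rewrite csum_shift, H, <- csum_scal by auto. rewrite Cmult_0_l, Cplus_0_l.
  apply csum_ext; intros i Hi. apply C_ext; unfold Re, Im; simpl; ring.
Qed.

Lemma log_poly_ln_pow k : log_poly (S k) (fun x => RtoC (ln x ^ k)).
Proof.
  exists (fun i => if Nat.eq_dec i k then RtoC 1 else RtoC 0); intros x Hx. simpl.
  destruct (Nat.eq_dec k k); [|lia].
  rewrite (csum_ext _ _ (fun _ => RtoC 0)), csum_zero.
  - ring.
  - intros i Hi. destruct (Nat.eq_dec i k); [lia|]. ring.
Qed.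

Lemma log_poly_const c : log_poly 1 (fun _ => c).
Proof.
  apply (log_poly_ext 1 (fun x => Cmult c (RtoC (ln x ^ 0)))).
  - intros; simpl; ring.
  - apply log_poly_scal, log_poly_ln_pow.
Qed.

Section Shift.
Variable h : R.
Let s := exp h.

Lemma ln_shift x : 0 < x -> ln (x * s) = ln x + h.
Proof. intros; unfold s; rewrite ln_mult, ln_exp; auto. apply exp_pos. Qed.

Lemma log_poly_shift_ln_pow i : log_poly (S i) (fun x => RtoC ((ln x + h) ^ i)).
Proof.
  induction i.
  - apply (log_poly_ext 1 (fun _ => RtoC 1)); [intros; simpl; auto | apply log_poly_const].
  - apply (log_poly_ext _ (fun x => Cplus (Cmult (RtoC (ln x)) (RtoC ((ln x + h) ^ i)))
                                      (Cmult (RtoC h) (RtoC ((ln x + h) ^ i))))).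
    + intros; apply C_ext; unfold Re, Im; simpl; ring.
    + apply log_poly_plus; [apply log_poly_mul_ln; auto|apply log_poly_S, log_poly_scal; auto].
Qed.

Lemma log_poly_shift n q : log_poly n q -> log_poly n (fun x => q (x * s)).
Proof.
  intros [a H].
  assert (G : forall m, log_poly m (fun x => csum m (fun i => Cmult (a i) (RtoC ((ln x + h) ^ i))))).
  { induction m; simpl.
    - apply log_poly_zero.
    - apply log_poly_plus; [apply log_poly_S; auto | apply log_poly_scal, log_poly_shift_ln_pow]. }
  specialize (G n). revert G; apply log_poly_ext. intros x Hx. rewrite H.
  - rewrite ln_shift; auto.
  - unfold s; apply Rmult_lt_0_compat; auto; apply exp_pos.
Qed.

Lemma log_poly_shift_ln_pow_sub i : log_poly i (fun x => RtoC ((ln x + h) ^ i - ln x ^ i)).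
Proof.
  induction i.
  - apply (log_poly_ext 0 (fun _ => RtoC 0)); [intros; apply C_ext; unfold Re, Im; simpl; ring|apply log_poly_zero].
  - apply (log_poly_ext _ (fun x => Cplus (Cmult (RtoC (ln x)) (RtoC ((ln x + h) ^ i - ln x ^ i)))
                                      (Cmult (RtoC h) (RtoC ((ln x + h) ^ i))))).
    + intros; apply C_ext; unfold Re, Im; simpl; ring.
    + apply log_poly_plus; [apply log_poly_mul_ln; auto|apply log_poly_scal, log_poly_shift_ln_pow].
Qed.

Lemma log_poly_shift_sub n q : log_poly (S n) q -> log_poly n (fun x => Cminus (q (x * s)) (q x)).
Proof.
  intros [a H].
  assert (G : forall m, log_poly m (fun x => csum (S m) (fun i => Cmult (a i) (RtoC ((ln x + h) ^ i - ln x ^ i))))).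
  { induction m.
    - apply (log_poly_ext 0 (fun _ => RtoC 0)); [|apply log_poly_zero].
      intros; apply C_ext; unfold Re, Im; simpl; ring.
    - change (log_poly (S m) (fun x => Cplus (csum (S m) (fun i => Cmult (a i) (RtoC ((ln x + h) ^ i - ln x ^ i))))
                      (Cmult (a (S m)) (RtoC ((ln x + h) ^ (S m) - ln x ^ (S m)))))).
      apply log_poly_plus; [apply log_poly_S; auto|apply log_poly_scal, log_poly_shift_ln_pow_sub]. }
  specialize (G n). revert G; apply log_poly_ext. intros x Hx.
  assert (Hxs : 0 < x * s) by (unfold s; apply Rmult_lt_0_compat; auto; apply exp_pos).
  rewrite (H x), (H (x * s)), ln_shift by auto.
  clear H. generalize (S n) as m. induction m; simpl.
  - apply C_ext; unfold Re, Im; simpl; ring.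
  - rewrite IHm. apply C_ext; unfold Re, Im; simpl; ring.
Qed.

Definition shift_diff (lam : C) (g : R -> C) : R -> C := fun x => Cminus (g (x * s)) (Cmult lam (g x)).
Fixpoint shift_diffs (L : list C) (g : R -> C) : R -> C :=
  match L with nil => g | lam :: L' => shift_diff lam (shift_diffs L' g) end.

Lemma s_pos : 0 < s.
Proof. apply exp_pos. Qed.

Lemma shift_diffs_ext L f1 f2 : (forall x, 0 < x -> f1 x = f2 x) -> forall x, 0 < x -> shift_diffs L f1 x = shift_diffs L f2 x.
Proof.
  induction L; simpl; intros E x Hx; auto. unfold shift_diff.
  rewrite !IHL; auto. pose proof s_pos; apply Rmult_lt_0_compat; auto.
Qed.

Lemma shift_diffs_app L1 L2 f x : shift_diffs (L1 ++ L2) f x = shift_diffs L1 (shift_diffs L2 f) x.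
Proof.
  revert x; induction L1; simpl; intros; auto. unfold shift_diff. rewrite !IHL1; auto.
Qed.

Lemma shift_diffs_plus L f1 f2 x : shift_diffs L (fun y => Cplus (f1 y) (f2 y)) x = Cplus (shift_diffs L f1 x) (shift_diffs L f2 x).
Proof.
  revert x; induction L; simpl; intros; auto. unfold shift_diff. rewrite !IHL; ring.
Qed.

Lemma shift_diffs_minus L f1 f2 x : shift_diffs L (fun y => Cminus (f1 y) (f2 y)) x = Cminus (shift_diffs L f1 x) (shift_diffs L f2 x).
Proof.
  revert x; induction L; simpl; intros; auto. unfold shift_diff. rewrite !IHL; ring.
Qed.

Lemma shift_diffs_zero L f : (forall x, 0 < x -> f x = RtoC 0) -> forall x, 0 < x -> shift_diffs L f x = RtoC 0.
Proof.
  intros E x Hx. rewrite (shift_diffs_ext L f (fun _ => RtoC 0)); auto.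
  clear. revert x. induction L; simpl; intros; auto. unfold shift_diff; rewrite !IHL; ring.
Qed.

Lemma log_poly_shift_diffs L n q : log_poly n q -> log_poly n (shift_diffs L q).
Proof.
  induction L; simpl; auto. intros Hq. specialize (IHL Hq). unfold shift_diff.
  apply (log_poly_ext _ (fun x => Cplus (shift_diffs L q (x * s)) (Cmult (Copp a) (shift_diffs L q x)))).
  - intros; ring.
  - apply log_poly_plus; [apply log_poly_shift; auto | apply log_poly_scal; auto].
Qed.

Definition pow_log_class (b : C) (n : nat) (f : R -> C) : Prop :=
  exists q, log_poly n q /\ forall x, 0 < x -> f x = Cmult (cpow x b) (q x).

Lemma pow_log_class_shift_diff b n lam f : pow_log_class b n f -> pow_log_class b n (shift_diff lam f).
Proof.
  intros (q & Hq & E). exists (fun x => Cminus (Cmult (cpow s b) (q (x * s))) (Cmult lam (q x))).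
  split.
  - apply (log_poly_ext _ (fun x => Cplus (Cmult (cpow s b) (q (x * s))) (Cmult (Copp lam) (q x)))).
    + intros; ring.
    + apply log_poly_plus; apply log_poly_scal; auto. apply log_poly_shift; auto.
  - intros x Hx. pose proof s_pos. unfold shift_diff. rewrite !E, cpow_mult; auto.
    ring. apply Rmult_lt_0_compat; auto.
Qed.

Lemma pow_log_class_shift_diff_eig b n f : pow_log_class b (S n) f -> pow_log_class b n (shift_diff (cpow s b) f).
Proof.
  intros (q & Hq & E). exists (fun x => Cmult (cpow s b) (Cminus (q (x * s)) (q x))).
  split.
  - apply log_poly_scal, log_poly_shift_sub; auto.
  - intros x Hx. pose proof s_pos. unfold shift_diff. rewrite !E, cpow_mult; auto.
    ring. apply Rmult_lt_0_compat; auto.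
Qed.

Lemma pow_log_class_0 b f : pow_log_class b 0 f -> forall x, 0 < x -> f x = RtoC 0.
Proof.
  intros (q & [a Hq] & E) x Hx. rewrite E, Hq by auto. simpl. ring.
Qed.

Lemma pow_log_class_shift_diffs b n L f : pow_log_class b n f -> pow_log_class b n (shift_diffs L f).
Proof. induction L; simpl; auto. intros; apply pow_log_class_shift_diff; auto. Qed.

Lemma pow_log_class_shift_diffs_eig b k : forall n f, pow_log_class b (k + n) f -> pow_log_class b n (shift_diffs (repeat (cpow s b) k) f).
Proof.
  induction k; simpl; auto. intros n f Hf. apply pow_log_class_shift_diff_eig. apply IHk.
  replace (k + S n)%nat with (S (k + n)) by lia. auto.
Qed.

Lemma shift_diff_inj n : forall q lam, log_poly n q -> lam <> RtoC 1 ->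
  (forall x, 0 < x -> shift_diff lam q x = RtoC 0) -> forall x, 0 < x -> q x = RtoC 0.
Proof.
  pose proof s_pos as Hs.
  induction n; intros q lam Hq Hl HD x Hx.
  - destruct Hq as [a Ha]; rewrite Ha; auto.
  - assert (Hr : forall y, 0 < y -> Cminus (q (y * s)) (q y) = RtoC 0).
    { apply (IHn _ lam); auto. apply log_poly_shift_sub; auto.
      intros y Hy. unfold shift_diff in *.
      assert (Hys : 0 < y * s) by (apply Rmult_lt_0_compat; auto).
      pose proof (HD _ Hy). pose proof (HD _ Hys).
      transitivity (Cminus (Cminus (q (y * s * s)) (Cmult lam (q (y * s))))
                           (Cminus (q (y * s)) (Cmult lam (q y)))); [ring|].
      rewrite H, H0; ring. }
    pose proof (HD x Hx) as H1. unfold shift_diff in H1.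
    pose proof (Hr x Hx) as H2.
    assert (E : q (x * s) = q x) by (transitivity (Cplus (Cminus (q (x*s)) (q x)) (q x)); [ring|rewrite H2; ring]).
    rewrite E in H1.
    assert (Hne : Cminus (RtoC 1) lam <> RtoC 0).
    { intros Z; apply Hl. transitivity (Cminus (RtoC 1) (Cminus (RtoC 1) lam)); [ring|rewrite Z; ring]. }
    transitivity (Cmult (Cinv (Cminus (RtoC 1) lam)) (Cminus (q x) (Cmult lam (q x)))).
    + field; auto.
    + rewrite H1; ring.
Qed.

Lemma shift_diffs_inj n L q : log_poly n q -> (forall lam, In lam L -> lam <> RtoC 1) ->
  (forall x, 0 < x -> shift_diffs L q x = RtoC 0) -> forall x, 0 < x -> q x = RtoC 0.
Proof.
  revert q; induction L; simpl; intros q Hq HL HQ; auto.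
  apply IHL; auto. apply (shift_diff_inj n _ a); auto. apply log_poly_shift_diffs; auto.
Qed.

Definition shift_stable (F : (R -> Prop) -> Prop) := forall P, F P -> F (fun x => P (x * s)).
Definition shift_reaches (F : (R -> Prop) -> Prop) := forall P, F P -> forall x, 0 < x -> exists k, P (x * s ^ k).

Lemma tends0_shift F {FF : Filter F} g : shift_stable F -> tends0 F g -> tends0 F (fun x => g (x * s)).
Proof. intros HS H eps Heps. apply (HS (fun x => Cmod (g x) < eps)); auto. Qed.

Lemma tends0_shift_diffs F {FF : Filter F} L g : shift_stable F -> tends0 F g -> tends0 F (shift_diffs L g).
Proof.
  intros HS; induction L; simpl; auto. intros H. specialize (IHL H). unfold shift_diff.
  apply (tends0_ext F (fun x => Cplus (shift_diffs L g (x * s)) (Cmult (Copp a) (shift_diffs L g x)))).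
  - apply filter_forall; intros; ring.
  - apply tends0_plus; auto. apply tends0_shift; auto. apply tends0_scal; auto.
Qed.

Lemma log_poly_tends0_eq0 F {FF : Filter F} n : shift_stable F -> shift_reaches F ->
  forall q, log_poly n q -> tends0 F q -> forall x, 0 < x -> q x = RtoC 0.
Proof.
  intros HS HR. pose proof s_pos as Hs. induction n; intros q Hq Ht x Hx.
  - destruct Hq as [a Ha]; rewrite Ha; auto.
  - assert (Hr : forall y, 0 < y -> Cminus (q (y * s)) (q y) = RtoC 0).
    { apply IHn. apply log_poly_shift_sub; auto.
      apply (tends0_ext F (fun y => Cplus (q (y * s)) (Cmult (Copp (RtoC 1)) (q y)))).
      - apply filter_forall; intros; ring.
      - apply tends0_plus; auto. apply tends0_shift; auto. apply tends0_scal; auto. }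
    assert (Hk : forall k, q (x * s ^ k) = q x).
    { induction k; simpl. rewrite Rmult_1_r; auto.
      assert (0 < x * s ^ k) by (apply Rmult_lt_0_compat; auto; apply pow_lt; auto).
      replace (x * (s * s ^ k)) with (x * s ^ k * s) by ring.
      rewrite <- IHk. transitivity (Cplus (Cminus (q (x * s ^ k * s)) (q (x * s ^ k))) (q (x * s ^ k)));
        [ring|rewrite Hr; auto; ring]. }
    destruct (Req_dec (Cmod (q x)) 0) as [Z|NZ].
    + apply Cmod_eq_0; auto.
    + exfalso. pose proof (Cmod_ge_0 (q x)).
      destruct (HR _ (Ht (Cmod (q x)) ltac:(lra)) x Hx) as [k Hk'].
      rewrite Hk in Hk'. lra.
Qed.

End Shift.

Lemma flat_map_split {A B : Type} (f : A -> list B) l t : In t l ->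
  exists P Q, flat_map f l = P ++ f t ++ Q.
Proof.
  induction l; simpl; [tauto|]. intros [E|H].
  - subst. exists nil, (flat_map f l). simpl; auto.
  - destruct (IHl H) as (P & Q & E). exists (f a ++ P), Q. rewrite E, app_assoc. auto.
Qed.

Lemma sin_zero_small t : Rabs t < PI -> sin t = 0 -> t = 0.
Proof.
  intros Ht Hs. destruct (Rtotal_order t 0) as [N|[Z|P]]; auto.
  - rewrite Rabs_left in Ht by auto. pose proof (sin_gt_0 (-t) ltac:(lra) ltac:(lra)).
    rewrite sin_neg in H; lra.
  - rewrite Rabs_right in Ht by lra. pose proof (sin_gt_0 t P ltac:(lra)); lra.
Qed.

Lemma cpow_exp_ne1 h b : b <> RtoC 0 -> h <> 0 -> Rabs (Im b * h) < PI -> cpow (exp h) b <> RtoC 1.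
Proof.
  intros Hb Hh Hs E. unfold cpow in E. rewrite ln_exp in E.
  destruct b as [br bi]. unfold Re, Im in *; simpl in *.
  injection E; intros E2 E1.
  pose proof (exp_pos (br * h)).
  assert (sin (bi * h) = 0).
  { apply (Rmult_eq_reg_l (exp (br * h))); lra. }
  apply sin_zero_small in H0; auto.
  rewrite H0, cos_0, Rmult_1_r in E1.
  assert (br * h = 0). { rewrite <- (ln_exp (br * h)), E1, ln_1; auto. }
  apply Hb. apply C_ext; unfold Re, Im in *; simpl.
  - apply (Rmult_eq_reg_r h); auto. lra.
  - apply (Rmult_eq_reg_r h); auto. lra.
Qed.

Lemma log_sum_1 m : List.Forall (fun t => (1 <= fst t)%nat) m -> log_sum m 1 = RtoC 0.
Proof.
  induction 1; unfold log_sum in *; simpl; auto.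
  rewrite IHForall, ln_1, pow_i by lia. ring.
Qed.

Lemma log_poly_log_sum m : exists n, log_poly n (log_sum m).
Proof.
  induction m as [|t m [n Hn]].
  - exists O. apply (log_poly_ext 0 (fun _ => RtoC 0)); [intros; auto|apply log_poly_zero].
  - exists (n + S (fst t))%nat.
    apply (log_poly_ext _ (fun x => Cplus (log_sum m x) (Cmult (snd t) (RtoC (ln x ^ fst t))))).
    + intros; unfold log_sum; simpl; auto.
    + apply log_poly_plus.
      * apply (log_poly_le n); auto; lia.
      * apply log_poly_scal. apply (log_poly_le (S (fst t))); [lia|apply log_poly_ln_pow].
Qed.

Definition pow_log_term (t : C * nat * C) (x : R) : C :=
  Cmult (snd t) (Cmult (cpow x (fst (fst t))) (RtoC (ln x ^ snd (fst t)))).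

Lemma pow_log_term_class t : pow_log_class (fst (fst t)) (S (snd (fst t))) (pow_log_term t).
Proof.
  exists (fun x => Cmult (snd t) (RtoC (ln x ^ snd (fst t)))). split.
  - apply log_poly_scal, log_poly_ln_pow.
  - intros; unfold pow_log_term; ring.
Qed.

Definition annihilator (h : R) (l : list (C * nat * C)) : list C :=
  flat_map (fun t => repeat (cpow (exp h) (fst (fst t))) (S (snd (fst t)))) l.

Lemma shift_diffs_annihilator h l l' : incl l l' ->
  forall x, 0 < x -> shift_diffs h (annihilator h l') (pow_log_sum l) x = RtoC 0.
Proof.
  induction l as [|t l IH]; intros Hincl x Hx.
  - apply shift_diffs_zero; auto.
  - change (shift_diffs h (annihilator h l') (fun y => Cplus (pow_log_sum l y) (pow_log_term t y)) x = RtoC 0).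
    rewrite shift_diffs_plus, IH; auto; [|intros u Hu; apply Hincl; simpl; auto].
    destruct (flat_map_split (fun t0 => repeat (cpow (exp h) (fst (fst t0))) (S (snd (fst t0)))) l' t)
      as (P & Q & E); [apply Hincl; simpl; auto|].
    unfold annihilator. rewrite E, !shift_diffs_app.
    rewrite (shift_diffs_zero h P); auto; [ring|]. intros y Hy.
    rewrite shift_diffs_app.
    apply (pow_log_class_0 (fst (fst t))); auto.
    apply pow_log_class_shift_diffs_eig. rewrite Nat.add_0_r.
    apply pow_log_class_shift_diffs, pow_log_term_class.
Qed.

Definition sum_abs_Im (l : list (C * nat * C)) : R :=
  fold_right (fun t acc => Rabs (Im (fst (fst t))) + acc) 0 l.

Lemma sum_abs_Im_ge0 l : 0 <= sum_abs_Im l.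
Proof. induction l; simpl; [lra|]. pose proof (Rabs_pos (Im (fst (fst a)))); lra. Qed.

Lemma sum_abs_Im_ge l t : In t l -> Rabs (Im (fst (fst t))) <= sum_abs_Im l.
Proof.
  induction l; simpl; [tauto|]. intros [E|H].
  - subst. pose proof (sum_abs_Im_ge0 l); lra.
  - pose proof (Rabs_pos (Im (fst (fst a)))). specialize (IHl H); lra.
Qed.

(* A step [h] this small keeps every [h * Im beta] inside [(-PI, PI)], so [exp h ^ beta <> 1]. *)
Lemma annihilator_ne1 l : List.Forall (fun t => fst (fst t) <> RtoC 0) l ->
  forall lam, In lam (annihilator (/ (sum_abs_Im l + 1)) l) -> lam <> RtoC 1.
Proof.
  intros Hl lam Hlam. pose proof (sum_abs_Im_ge0 l) as HB.
  apply in_flat_map in Hlam. destruct Hlam as (t & Ht & Hr).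
  apply repeat_spec in Hr. subst lam.
  rewrite Forall_forall in Hl.
  apply cpow_exp_ne1; auto.
  - apply Rinv_neq_0_compat; lra.
  - pose proof (sum_abs_Im_ge _ _ Ht).
    rewrite Rabs_mult, Rabs_inv, (Rabs_right (sum_abs_Im l + 1)) by lra.
    assert (Rabs (Im (fst (fst t))) * / (sum_abs_Im l + 1) < 1).
    { apply (Rmult_lt_reg_r (sum_abs_Im l + 1)); [lra|]. field_simplify; lra. }
    pose proof PI2_3_2. pose proof PI2_1. lra.
Qed.

(* The difference of two expansions of [g] is a sum of terms
   [x^beta ln^k x] (beta <> 0) plus a polynomial in [ln x], tending to 0 along [F].  Applying the
   difference operators [u |-> u(x e^h) - e^(h beta) u(x)] kills the power terms but is injective on
   polynomials in [ln x]; and a polynomial in [ln x] tending to 0 along every geometric sequence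
   [x e^(kh)] vanishes. *)
Lemma is_LIM_unique F {FF : Filter F} : F (fun x => 0 < x) ->
  (forall h, 0 < h -> shift_stable h F /\ shift_reaches h F) ->
  forall g c1 c2, is_LIM F g c1 -> is_LIM F g c2 -> c1 = c2.
Proof.
  intros Hpos Hsh g c1 c2 H1 H2.
  apply is_LIM_iff in H1; apply is_LIM_iff in H2; auto.
  destruct H1 as (l1 & m1 & A1 & B1 & D1). destruct H2 as (l2 & m2 & A2 & B2 & D2).
  pose proof (sum_abs_Im_ge0 (l1 ++ l2)) as HB.
  set (h := / (sum_abs_Im (l1 ++ l2) + 1)).
  destruct (Hsh h) as [HS HR]; [apply Rinv_0_lt_compat; lra|].
  set (LL := annihilator h (l1 ++ l2)).
  set (p := fun x => Cplus (Cminus (log_sum m2 x) (log_sum m1 x)) (Cminus c2 c1)).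
  destruct (log_poly_log_sum m1) as [n1 P1]. destruct (log_poly_log_sum m2) as [n2 P2].
  assert (Pp : log_poly (n1 + n2 + 1) p).
  { unfold p. apply (log_poly_ext _ (fun x => Cplus (Cplus (log_sum m2 x)
                      (Cmult (Copp (RtoC 1)) (log_sum m1 x))) (Cminus c2 c1))).
    - intros; ring.
    - apply log_poly_plus; [apply log_poly_plus|].
      + apply (log_poly_le n2); auto; lia.
      + apply log_poly_scal. apply (log_poly_le n1); auto; lia.
      + apply (log_poly_le 1); [lia|apply log_poly_const]. }
  set (D := fun x => Cminus (Cminus (Cminus (Cminus (g x) (pow_log_sum l1 x)) (log_sum m1 x)) c1)
                           (Cminus (Cminus (Cminus (g x) (pow_log_sum l2 x)) (log_sum m2 x)) c2)).
  assert (TD : tends0 F D).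
  { apply (tends0_ext F (fun x => Cplus (Cminus (Cminus (Cminus (g x) (pow_log_sum l1 x)) (log_sum m1 x)) c1)
           (Cmult (Copp (RtoC 1)) (Cminus (Cminus (Cminus (g x) (pow_log_sum l2 x)) (log_sum m2 x)) c2)))).
    - apply filter_forall; intros; unfold D; ring.
    - apply tends0_plus; auto. apply tends0_scal; auto. }
  assert (TQ : tends0 F (shift_diffs h LL p)).
  { apply (tends0_ext F (shift_diffs h LL D)); [|apply tends0_shift_diffs; auto].
    revert Hpos; apply filter_imp; intros x Hx.
    rewrite (shift_diffs_ext h LL D (fun x => Cplus (Cminus (pow_log_sum l2 x) (pow_log_sum l1 x)) (p x)));
      [|intros; unfold D, p; ring|auto].
    unfold LL; rewrite shift_diffs_plus, shift_diffs_minus, !shift_diffs_annihilator by (auto using incl_appl, incl_appr, incl_refl).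
    ring. }
  assert (Zp : forall x, 0 < x -> p x = RtoC 0).
  { apply (shift_diffs_inj h (n1 + n2 + 1) LL); auto; [apply annihilator_ne1, Forall_app; auto|].
    apply (log_poly_tends0_eq0 h F (n1 + n2 + 1)); auto. apply log_poly_shift_diffs; auto. }
  pose proof (Zp 1 Rlt_0_1) as Z. unfold p in Z. rewrite !log_sum_1 in Z by auto.
  transitivity (Cminus c2 (Cplus (Cminus (RtoC 0) (RtoC 0)) (Cminus c2 c1))); [ring|].
  rewrite Z. ring.
Qed.

Lemma at_right_0_iff (P : R -> Prop) : at_right 0 P <-> exists e, 0 < e /\ forall y, 0 < y < e -> P y.
Proof.
  unfold at_right, within, locally. split.
  - intros [eps H]. exists eps; split; [apply cond_pos|]. intros y Hy. apply H; [|lra].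
    unfold ball; simpl; unfold AbsRing_ball, abs, minus, plus, opp; simpl. rewrite Rabs_right; lra.
  - intros (e & He & H). exists (mkposreal e He). intros y Hy Hy0. apply H. split; auto.
    unfold ball in Hy; simpl in Hy; unfold AbsRing_ball, abs, minus, plus, opp in Hy; simpl in Hy.
    rewrite Rabs_right in Hy; lra.
Qed.

Lemma at_right_0_pos : at_right 0 (fun z => 0 < z).
Proof. apply at_right_0_iff; exists 1; split; [lra|]; intros; lra. Qed.

Lemma Rbar_locally_pinfty_iff (P : R -> Prop) : Rbar_locally p_infty P <-> exists M, forall x, M < x -> P x.
Proof. simpl; tauto. Qed.

Lemma exp_pow h k : exp h ^ k = exp (INR k * h).
Proof.
  induction k; simpl. rewrite Rmult_0_l, exp_0; auto.
  rewrite IHk. rewrite <- exp_plus. f_equal. destruct k; simpl; ring.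
Qed.

Lemma pinfty_shift_stable h : 0 < h -> shift_stable h (Rbar_locally p_infty) /\ shift_reaches h (Rbar_locally p_infty).
Proof.
  intros Hh. pose proof (exp_pos h) as Hs. split.
  - intros P HP. apply Rbar_locally_pinfty_iff in HP; apply Rbar_locally_pinfty_iff. destruct HP as [M HM].
    exists (M / exp h). intros x Hx. apply HM.
    apply (Rmult_lt_compat_r (exp h)) in Hx; auto. unfold Rdiv in Hx.
    rewrite Rmult_assoc, Rinv_l, Rmult_1_r in Hx; lra.
  - intros P HP x Hx. apply Rbar_locally_pinfty_iff in HP. destruct HP as [M HM].
    destruct (INR_archimed h (ln (Rmax M 1) - ln x)) as [k Hk]; [lra|].
    exists k. apply HM. rewrite exp_pow.
    apply Rle_lt_trans with (Rmax M 1); [apply Rmax_l|].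
    rewrite <- (exp_ln x) at 1 by auto. rewrite <- exp_plus.
    rewrite <- (exp_ln (Rmax M 1)) at 1 by (pose proof (Rmax_r M 1); lra).
    apply exp_increasing. lra.
Qed.

Lemma is_LIM_pinfty_unique g c1 c2 : is_LIM (Rbar_locally p_infty) g c1 -> is_LIM (Rbar_locally p_infty) g c2 -> c1 = c2.
Proof.
  apply is_LIM_unique; [apply Rbar_locally_filter| |].
  - apply Rbar_locally_pinfty_iff. exists 0; auto.
  - apply pinfty_shift_stable.
Qed.

Lemma LIM_infty_eq g c : is_LIM (Rbar_locally p_infty) g c -> LIM_infty g = c.
Proof.
  intros H. unfold LIM_infty.
  destruct (epsilon_spec (inhabits (RtoC 0)) (is_LIM (Rbar_locally p_infty) g)) as [];
  [exists c; auto|].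
  apply (is_LIM_pinfty_unique g); auto. apply epsilon_spec. exists c; auto.
Qed.

(** * Calculus of complex-valued functions of a real variable *)

Lemma is_derive_continuity_pt f x l : is_derive f x l -> continuity_pt f x.
Proof.
  intros H. apply continuity_pt_filterlim. apply (ex_derive_continuous f x). exists l; auto.
Qed.

Lemma le_of_derive_ge0 (f df : R -> R) a b : a <= b ->
  (forall x, a <= x <= b -> is_derive f x (df x)) ->
  (forall x, a <= x <= b -> 0 <= df x) -> f a <= f b.
Proof.
  intros Hab Hd Hp.
  destruct (MVT_gen f a b df) as (c & Hc & E).
  - intros x Hx. rewrite Rmin_left, Rmax_right in Hx by auto. apply Hd; lra.
  - intros x Hx. rewrite Rmin_left, Rmax_right in Hx by auto. eapply is_derive_continuity_pt, Hd; lra.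
  - rewrite Rmin_left, Rmax_right in Hc by auto. specialize (Hp c Hc).
    assert (0 <= df c * (b - a)) by (apply Rmult_le_pos; lra). lra.
Qed.

Lemma Rabs_sub_le_of_derive (u du v dv : R -> R) a b : a <= b ->
  (forall x, a <= x <= b -> is_derive u x (du x)) ->
  (forall x, a <= x <= b -> is_derive v x (dv x)) ->
  (forall x, a <= x <= b -> Rabs (du x) <= dv x) ->
  Rabs (u b - u a) <= v b - v a.
Proof.
  intros Hab Hu Hv Hb.
  pose proof (le_of_derive_ge0 (fun x => v x - u x) (fun x => dv x - du x) a b Hab) as H1.
  pose proof (le_of_derive_ge0 (fun x => v x + u x) (fun x => dv x + du x) a b Hab) as H2.
  simpl in H1, H2.
  assert (v a - u a <= v b - u b).
  { apply H1. intros; apply (@is_derive_minus R_AbsRing R_NormedModule); auto.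
    intros x Hx; specialize (Hb x Hx); apply Rabs_le_between in Hb; lra. }
  assert (v a + u a <= v b + u b).
  { apply H2. intros; apply (@is_derive_plus R_AbsRing R_NormedModule); auto.
    intros x Hx; specialize (Hb x Hx); apply Rabs_le_between in Hb; lra. }
  apply Rabs_le; lra.
Qed.

Lemma Cmod_le_of_components (z : C) B : Rabs (Re z) <= B -> Rabs (Im z) <= B -> Cmod z <= 2 * B.
Proof.
  intros H1 H2. eapply Rle_trans; [apply Cmod_2Rmax|].
  assert (sqrt 2 < 2).
  { rewrite <- (sqrt_square 2) at 2 by lra. apply sqrt_lt_1_alt; lra. }
  assert (Rmax (Rabs (fst z)) (Rabs (snd z)) <= B) by (apply Rmax_lub; auto).
  pose proof (Rmax_l (Rabs (fst z)) (Rabs (snd z))). pose proof (Rabs_pos (fst z)).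
  pose proof (sqrt_pos 2). nra.
Qed.

Lemma im_le_Cmod (z : C) : Rabs (Im z) <= Cmod z.
Proof. pose proof (Rmax_Cmod z). pose proof (Rmax_r (Rabs (fst z)) (Rabs (snd z))). unfold Im; lra. Qed.

Lemma Cmod_sub_le_of_derive (u du : R -> C) (v dv : R -> R) a b : a <= b ->
  (forall x, a <= x <= b -> is_derive_C u x (du x)) ->
  (forall x, a <= x <= b -> is_derive v x (dv x)) ->
  (forall x, a <= x <= b -> Cmod (du x) <= dv x) ->
  Cmod (Cminus (u b) (u a)) <= 2 * (v b - v a).
Proof.
  intros Hab Hu Hv Hb. apply Cmod_le_of_components.
  - change (Re (Cminus (u b) (u a))) with (Re (u b) - Re (u a)).
    apply (Rabs_sub_le_of_derive (fun x => Re (u x)) (fun x => Re (du x)) v dv); auto.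
    + intros x Hx; apply Hu; auto.
    + intros x Hx; eapply Rle_trans; [apply re_le_Cmod|apply Hb; auto].
  - change (Im (Cminus (u b) (u a))) with (Im (u b) - Im (u a)).
    apply (Rabs_sub_le_of_derive (fun x => Im (u x)) (fun x => Im (du x)) v dv); auto.
    + intros x Hx; apply Hu; auto.
    + intros x Hx; eapply Rle_trans; [apply im_le_Cmod|apply Hb; auto].
Qed.

Fixpoint rsum (n : nat) (g : nat -> R) : R := match n with O => 0 | S n => rsum n g + g n end.

Definition taylor_poly (h : nat -> R -> R) (N : nat) (y : R) : R :=
  rsum N (fun j => h j 0 * y ^ j / INR (fact j)).

Lemma taylor_poly_derive h N y : is_derive (taylor_poly h (S N)) y (taylor_poly (fun j => h (S j)) N y).
Proof.
  induction N.
  - unfold taylor_poly; simpl. auto_derive; auto.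
  - unfold taylor_poly in *.
    apply (is_derive_ext (fun t => rsum (S N) (fun j => h j 0 * t ^ j / INR (fact j)) + h (S N) 0 * t ^ (S N) / INR (fact (S N)))); [intros; simpl; auto|].
    change (rsum (S N) (fun j => h (S j) 0 * y ^ j / INR (fact j))) with
      (rsum N (fun j => h (S j) 0 * y ^ j / INR (fact j)) + h (S N) 0 * y ^ N / INR (fact N)).
    apply (@is_derive_plus R_AbsRing R_NormedModule); auto.
    evar (l : R). replace (h (S N) 0 * y ^ N / INR (fact N)) with l.
    + unfold l. auto_derive; [auto|reflexivity].
    + unfold l. pose proof (INR_fact_lt_0 N). pose proof (pos_INR N). simpl fact. rewrite plus_INR, mult_INR.
      change (match N with 0%nat => 1 | S _ => INR N + 1 end) with (INR (S N)). rewrite S_INR.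
      field. split; nra.
Qed.

Lemma taylor_poly_0 h N : taylor_poly h (S N) 0 = h O 0.
Proof.
  induction N; unfold taylor_poly in *; simpl. field.
  simpl in IHN. rewrite IHN. unfold Rdiv. rewrite Rmult_0_l, Rmult_0_r, Rmult_0_l. apply Rplus_0_r.
Qed.

Lemma taylor_remainder_le N : forall (h : nat -> R -> R) a M, 0 <= a ->
  (forall j y, (j < N)%nat -> 0 <= y <= a -> is_derive (h j) y (h (S j) y)) ->
  (forall y, 0 <= y <= a -> Rabs (h N y) <= M) ->
  forall y, 0 <= y <= a -> Rabs (h O y - taylor_poly h N y) <= M * y ^ N / INR (fact N).
Proof.
  induction N; intros h a M Ha Hd Hb y Hy.
  - unfold taylor_poly; simpl. rewrite Rminus_0_r. specialize (Hb y Hy). lra.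
  - pose proof (IHN (fun j => h (S j)) a M Ha) as IH.
    assert (IH' : forall t, 0 <= t <= a -> Rabs (h 1%nat t - taylor_poly (fun j => h (S j)) N t) <= M * t ^ N / INR (fact N)).
    { apply IH; auto. intros; apply Hd; auto; lia. }
    pose proof (Rabs_sub_le_of_derive (fun t => h O t - taylor_poly h (S N) t) (fun t => h 1%nat t - taylor_poly (fun j => h (S j)) N t)
                        (fun t => M * t ^ (S N) / INR (fact (S N))) (fun t => M * t ^ N / INR (fact N)) 0 y) as C.
    simpl in C. rewrite taylor_poly_0 in C.
    replace (h 0%nat 0 - h 0%nat 0) with 0 in C by ring.
    replace (M * (0 * 0 ^ N) / INR (fact N + N * fact N)) with 0 in C by (unfold Rdiv; ring).
    rewrite Rminus_0_r, Rminus_0_r in C.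
    replace (INR (fact N + N * fact N)) with (INR (fact (S N))) in C by auto.
    apply C; try lra.
    + intros x Hx. apply (@is_derive_minus R_AbsRing R_NormedModule); [apply Hd; [lia|lra]|apply taylor_poly_derive].
    + intros x Hx. evar (l : R). replace (M * x ^ N / INR (fact N)) with l.
      * unfold l. auto_derive; [auto|reflexivity].
      * unfold l. pose proof (INR_fact_lt_0 N). pose proof (pos_INR N). simpl fact. rewrite plus_INR, mult_INR.
        destruct N as [|n].
        -- simpl. field.
        -- replace (x * (1 * (INR (S n) * x ^ Init.Nat.pred (S n)))) with (INR (S n) * x ^ (S n)) by (simpl; ring).
           field. split; nra.
    + intros x Hx. apply IH'; lra.
Qed.

Definition taylor_poly_C (G : nat -> R -> C) (N : nat) (y : R) : C :=
  csum N (fun j => Cmult (G j 0) (RtoC (y ^ j / INR (fact j)))).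

Lemma Re_taylor_poly_C G N y : Re (taylor_poly_C G N y) = taylor_poly (fun j t => Re (G j t)) N y.
Proof.
  unfold taylor_poly_C, taylor_poly. induction N; simpl; auto. rewrite <- IHN. unfold Re, Im; simpl. unfold Rdiv; rewrite Rmult_0_r; lra.
Qed.

Lemma Im_taylor_poly_C G N y : Im (taylor_poly_C G N y) = taylor_poly (fun j t => Im (G j t)) N y.
Proof.
  unfold taylor_poly_C, taylor_poly. induction N; simpl; auto. rewrite <- IHN. unfold Re, Im; simpl. unfold Rdiv; rewrite Rmult_0_r; lra.
Qed.

Lemma taylor_remainder_le_C N (G : nat -> R -> C) a M : 0 <= a ->
  (forall j y, (j < N)%nat -> 0 <= y <= a -> is_derive_C (G j) y (G (S j) y)) ->
  (forall y, 0 <= y <= a -> Cmod (G N y) <= M) ->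
  forall y, 0 <= y <= a -> Cmod (Cminus (G O y) (taylor_poly_C G N y)) <= 2 * (M * y ^ N / INR (fact N)).
Proof.
  intros Ha Hd Hb y Hy. apply Cmod_le_of_components.
  - change (Re (Cminus (G O y) (taylor_poly_C G N y))) with (Re (G O y) - Re (taylor_poly_C G N y)).
    rewrite Re_taylor_poly_C. apply (taylor_remainder_le N (fun j t => Re (G j t)) a M); auto.
    + intros; apply Hd; auto.
    + intros t Ht; eapply Rle_trans; [apply re_le_Cmod|apply Hb; auto].
  - change (Im (Cminus (G O y) (taylor_poly_C G N y))) with (Im (G O y) - Im (taylor_poly_C G N y)).
    rewrite Im_taylor_poly_C. apply (taylor_remainder_le N (fun j t => Im (G j t)) a M); auto.
    + intros; apply Hd; auto.
    + intros t Ht; eapply Rle_trans; [apply im_le_Cmod|apply Hb; auto].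
Qed.

Lemma ball_R_iff (x y : R) (eps : R) : ball x eps y <-> Rabs (y - x) < eps.
Proof. unfold ball; simpl; unfold AbsRing_ball, abs, minus, plus, opp; simpl. tauto. Qed.

Lemma cauchy_pinfty_R (u w : R -> R) :
  (forall c1 c2, 1 <= c1 <= c2 -> Rabs (u c2 - u c1) <= w c1) ->
  (forall eps, 0 < eps -> exists M, forall c, M <= c -> w c < eps) ->
  exists L, forall c, 1 <= c -> Rabs (u c - L) <= w c.
Proof.
  intros Hc Hw.
  set (F := filtermap u (Rbar_locally p_infty)).
  assert (PF : ProperFilter F) by (apply filtermap_proper_filter; apply Rbar_locally_filter).
  assert (CF : forall eps : posreal, exists x : R, F (ball x eps)).
  { intros eps. destruct (Hw eps (cond_pos eps)) as [M HM].
    exists (u (Rmax M 1)). unfold F, filtermap. simpl. exists (Rmax M 1). intros c Hc'.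
    apply ball_R_iff. eapply Rle_lt_trans; [apply Hc|apply HM].
    - split; [apply Rmax_r|lra].
    - apply Rmax_l. }
  exists (R_complete_lim F). intros c Hc1.
  destruct (Rle_or_lt (Rabs (u c - R_complete_lim F)) (w c)) as [Hle|Hlt]; auto.
  exfalso. set (d := Rabs (u c - R_complete_lim F) - w c).
  assert (Hd : 0 < d) by (unfold d; lra).
  pose proof (R_complete F PF CF (mkposreal d Hd)) as H1.
  assert (H1' : Rbar_locally p_infty (fun x => ball (R_complete_lim F) d (u x))) by exact H1.
  clear H1. destruct H1' as [M1 H1].
  set (c' := Rmax (M1 + 1) c).
  assert (Hc' : M1 < c') by (unfold c'; pose proof (Rmax_l (M1 + 1) c); lra).
  specialize (H1 c' Hc').
  apply ball_R_iff in H1.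
  pose proof (Hc c c' ltac:(unfold c'; split; [lra|apply Rmax_r])) as H2.
  assert (Rabs (u c - R_complete_lim F) <= Rabs (u c' - u c) + Rabs (u c' - R_complete_lim F)).
  { replace (u c - R_complete_lim F) with (- (u c' - u c) + (u c' - R_complete_lim F)) by ring.
    eapply Rle_trans; [apply Rabs_triang|]. rewrite Rabs_Ropp; lra. }
  revert H1. unfold ball; simpl; unfold AbsRing_ball, abs, minus, plus, opp; simpl. intros H1. unfold d in H1. replace (u c' + - R_complete_lim F) with (u c' - R_complete_lim F) in H1 by ring. lra.
Qed.

Lemma cauchy_pinfty_C (u : R -> C) (w : R -> R) :
  (forall c1 c2, 1 <= c1 <= c2 -> Cmod (Cminus (u c2) (u c1)) <= w c1) ->
  (forall eps, 0 < eps -> exists M, forall c, M <= c -> w c < eps) ->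
  exists L, forall c, 1 <= c -> Cmod (Cminus (u c) L) <= 2 * w c.
Proof.
  intros Hc Hw.
  destruct (cauchy_pinfty_R (fun c => Re (u c)) w) as [L1 H1]; auto.
  { intros; eapply Rle_trans; [|apply Hc; eauto]. apply (re_le_Cmod (Cminus (u c2) (u c1))). }
  destruct (cauchy_pinfty_R (fun c => Im (u c)) w) as [L2 H2]; auto.
  { intros; eapply Rle_trans; [|apply Hc; eauto]. apply (im_le_Cmod (Cminus (u c2) (u c1))). }
  exists (L1, L2). intros c Hc1. apply Cmod_le_of_components; [apply H1|apply H2]; auto.
Qed.

Lemma is_derive_const_R (c : R) x : is_derive (fun _ : R => c) x 0.
Proof. auto_derive; auto. Qed.

Lemma is_derive_C_plus u v x du dv : is_derive_C u x du -> is_derive_C v x dv ->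
  is_derive_C (fun t => Cplus (u t) (v t)) x (Cplus du dv).
Proof.
  intros [A1 A2] [B1 B2]; split; simpl; apply (@is_derive_plus R_AbsRing R_NormedModule); auto.
Qed.

Lemma is_derive_C_minus u v x du dv : is_derive_C u x du -> is_derive_C v x dv ->
  is_derive_C (fun t => Cminus (u t) (v t)) x (Cminus du dv).
Proof.
  intros [A1 A2] [B1 B2]; split; simpl; apply (@is_derive_minus R_AbsRing R_NormedModule); auto.
Qed.

Lemma is_derive_C_scal u x du (w : C) : is_derive_C u x du ->
  is_derive_C (fun t => Cmult w (u t)) x (Cmult w du).
Proof.
  intros [A1 A2]; split; unfold Re, Im in *; simpl.
  - apply (@is_derive_minus R_AbsRing R_NormedModule); apply is_derive_scal; auto.
  - apply (@is_derive_plus R_AbsRing R_NormedModule); apply is_derive_scal; auto.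
Qed.

Lemma is_derive_C_ext u v x du : (forall t, u t = v t) -> is_derive_C u x du -> is_derive_C v x du.
Proof.
  intros E [A1 A2]; split; [apply (is_derive_ext (fun t => Re (u t)))|apply (is_derive_ext (fun t => Im (u t)))];
  auto; intros; rewrite E; auto.
Qed.

Lemma is_derive_C_csum N (g : nat -> R -> C) dg x : (forall j, (j < N)%nat -> is_derive_C (g j) x (dg j)) ->
  is_derive_C (fun t => csum N (fun j => g j t)) x (csum N dg).
Proof.
  induction N; simpl; intros H.
  - split; simpl; apply is_derive_const_R.
  - apply is_derive_C_plus; auto.
Qed.

Lemma is_derive_C_ln x : 0 < x -> is_derive_C (fun t => RtoC (ln t)) x (RtoC (/ x)).
Proof.
  intros; split; unfold Re, Im; simpl.
  - auto_derive; auto. field; lra.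
  - apply is_derive_const_R.
Qed.

Lemma is_derive_C_continuous_Re u x du : is_derive_C u x du -> continuous (fun t => Re (u t)) x.
Proof. intros [A _]. apply continuity_pt_filterlim. eapply is_derive_continuity_pt; eauto. Qed.

Lemma is_derive_C_continuous_Im u x du : is_derive_C u x du -> continuous (fun t => Im (u t)) x.
Proof. intros [_ A]. apply continuity_pt_filterlim. eapply is_derive_continuity_pt; eauto. Qed.

Lemma is_derive_C_RInt (g dg : R -> C) (lo a x : R) : lo < a -> lo < x ->
  (forall t, lo < t -> is_derive_C g t (dg t)) ->
  is_derive_C (fun c => RInt_C g a c) x (g x).
Proof.
  intros Ha Hx Hd.
  assert (Hex : forall b, lo < b -> ex_RInt (fun t => Re (g t)) a b /\ ex_RInt (fun t => Im (g t)) a b).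
  { intros b Hb. split; apply (@ex_RInt_continuous R_CompleteNormedModule); intros z Hz;
    [eapply is_derive_C_continuous_Re|eapply is_derive_C_continuous_Im]; apply Hd;
    pose proof (Rmin_glb_lt a b lo Ha Hb) as HH; lra. }
  assert (Hloc : locally x (fun b => lo < b)).
  { exists (mkposreal (x - lo) ltac:(lra)). intros y Hy. apply ball_R_iff in Hy. simpl in Hy.
    apply Rabs_lt_between in Hy. unfold minus, plus, opp in Hy; simpl in Hy. lra. }
  split; unfold RInt_C; simpl.
  - apply (is_derive_RInt (fun t => Re (g t)) (fun c => RInt (fun t => Re (g t)) a c) a x).
    + revert Hloc; apply filter_imp; intros b Hb. apply (@RInt_correct R_CompleteNormedModule); apply Hex; auto.
    + eapply is_derive_C_continuous_Re; apply Hd; auto.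
  - apply (is_derive_RInt (fun t => Im (g t)) (fun c => RInt (fun t => Im (g t)) a c) a x).
    + revert Hloc; apply filter_imp; intros b Hb. apply (@RInt_correct R_CompleteNormedModule); apply Hex; auto.
    + eapply is_derive_C_continuous_Im; apply Hd; auto.
Qed.

Lemma RInt_C_Chasles (g dg : R -> C) lo a b c : lo < a -> lo < b -> lo < c ->
  (forall t, lo < t -> is_derive_C g t (dg t)) ->
  Cplus (RInt_C g a b) (RInt_C g b c) = RInt_C g a c.
Proof.
  intros Ha Hb Hc Hd.
  assert (Hex : forall a b, lo < a -> lo < b -> ex_RInt (fun t => Re (g t)) a b /\ ex_RInt (fun t => Im (g t)) a b).
  { intros a' b' Ha' Hb'. split; apply (@ex_RInt_continuous R_CompleteNormedModule); intros z Hz;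
    [eapply is_derive_C_continuous_Re|eapply is_derive_C_continuous_Im]; apply Hd;
    pose proof (Rmin_glb_lt a' b' lo Ha' Hb') as HH; lra. }
  unfold RInt_C. apply C_ext; unfold Re at 1, Im at 1; simpl.
  - apply (RInt_Chasles (fun t => Re (g t))); apply Hex; auto.
  - apply (RInt_Chasles (fun t => Im (g t))); apply Hex; auto.
Qed.

Lemma RInt_C_ext (g1 g2 : R -> C) a b : (forall t, Rmin a b < t < Rmax a b -> g1 t = g2 t) ->
  RInt_C g1 a b = RInt_C g2 a b.
Proof.
  intros E. unfold RInt_C. f_equal; apply RInt_ext; intros; rewrite E; auto.
Qed.

Lemma RInt_C_point g a : RInt_C g a a = RtoC 0.
Proof. unfold RInt_C. rewrite !RInt_point. auto. Qed.

Lemma bounded_on_segment_R (u : R -> R) a b : a <= b -> (forall x, a <= x <= b -> continuity_pt u x) ->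
  exists M, forall x, a <= x <= b -> Rabs (u x) <= M.
Proof.
  intros Hab Hc.
  destruct (continuity_ab_maj u a b Hab Hc) as [x1 [H1 _]].
  destruct (continuity_ab_maj (fun x => - u x) a b Hab) as [x2 [H2 _]].
  { intros; apply (continuity_pt_opp u); auto. }
  exists (Rmax (u x1) (- u x2)). intros x Hx. apply Rabs_le. split.
  - specialize (H2 x Hx). pose proof (Rmax_r (u x1) (- u x2)). lra.
  - specialize (H1 x Hx). pose proof (Rmax_l (u x1) (- u x2)). lra.
Qed.

Lemma bounded_on_segment_C (g dg : R -> C) a b : a <= b -> (forall x, a <= x <= b -> is_derive_C g x (dg x)) ->
  exists M, 0 <= M /\ forall x, a <= x <= b -> Cmod (g x) <= M.
Proof.
  intros Hab Hd.
  destruct (bounded_on_segment_R (fun x => Re (g x)) a b Hab) as [M1 H1].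
  { intros x Hx. apply continuity_pt_filterlim. eapply is_derive_C_continuous_Re; apply Hd; auto. }
  destruct (bounded_on_segment_R (fun x => Im (g x)) a b Hab) as [M2 H2].
  { intros x Hx. apply continuity_pt_filterlim. eapply is_derive_C_continuous_Im; apply Hd; auto. }
  exists (2 * Rmax (Rmax M1 M2) 0). split.
  - pose proof (Rmax_r (Rmax M1 M2) 0); lra.
  - intros x Hx. apply Cmod_le_of_components.
    + eapply Rle_trans; [apply H1; auto|]. eapply Rle_trans; [apply Rmax_l|apply Rmax_l].
    + eapply Rle_trans; [apply H2; auto|]. eapply Rle_trans; [apply Rmax_r|apply Rmax_l].
Qed.

Lemma rpow_pos y t : 0 < rpow y t.
Proof. apply exp_pos. Qed.

Lemma rpow_plus y t u : rpow y t * rpow y u = rpow y (t + u).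
Proof. unfold rpow. rewrite <- exp_plus. f_equal; ring. Qed.

Lemma rpow_nat y n : 0 < y -> rpow y (INR n) = y ^ n.
Proof.
  intros Hy; induction n; unfold rpow in *; simpl.
  - rewrite Rmult_0_l, exp_0; auto.
  - rewrite <- IHn. rewrite <- (exp_ln y) at 2 by auto. rewrite <- exp_plus. f_equal.
    destruct n; simpl; ring.
Qed.

Lemma rpow_inv_pow y n : 0 < y -> (/ y) ^ n = rpow y (- INR n).
Proof.
  intros Hy. rewrite <- rpow_nat by (apply Rinv_0_lt_compat; auto). unfold rpow.
  rewrite ln_Rinv by auto. f_equal; ring.
Qed.

Lemma rpow_div b z t : 0 < b -> 0 < z -> rpow (b / z) t = rpow b t * rpow z (- t).
Proof.
  intros; unfold rpow, Rdiv. rewrite ln_mult, ln_Rinv, <- exp_plus; auto.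
  f_equal; ring. apply Rinv_0_lt_compat; auto.
Qed.

Lemma rpow_small_pinfty a : a < 0 -> forall eps, 0 < eps -> exists M, forall y, M <= y -> rpow y a < eps.
Proof.
  intros Ha eps Heps. exists (Rmax 1 (exp (ln eps / a) + 1)). intros y Hy.
  pose proof (Rmax_l 1 (exp (ln eps / a) + 1)). pose proof (Rmax_r 1 (exp (ln eps / a) + 1)).
  unfold rpow. rewrite <- (exp_ln eps) by auto. apply exp_increasing.
  assert (ln (exp (ln eps / a)) < ln y) by (apply ln_increasing; [apply exp_pos|lra]).
  rewrite ln_exp in H1.
  apply (Rmult_lt_compat_r (- a)) in H1; [|lra].
  unfold Rdiv in H1. replace (ln eps * / a * - a) with (- ln eps) in H1 by (field; lra). nra.
Qed.

Lemma rpow_small_0 a : 0 < a -> forall eps, 0 < eps -> exists d, 0 < d /\ forall y, 0 < y < d -> rpow y a < eps.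
Proof.
  intros Ha eps Heps. exists (exp (ln eps / a)). split; [apply exp_pos|]. intros y Hy.
  unfold rpow. rewrite <- (exp_ln eps) by auto. apply exp_increasing.
  assert (ln y < ln (exp (ln eps / a))) by (apply ln_increasing; lra).
  rewrite ln_exp in H. apply (Rmult_lt_compat_r a) in H; auto.
  unfold Rdiv in H. replace (ln eps * / a * a) with (ln eps) in H by (field; lra). lra.
Qed.

Lemma ln_lt_exp_ln x : ln x < exp (ln x).
Proof.
  destruct (Req_dec (ln x) 0) as [E|E].
  - rewrite E, exp_0; lra.
  - pose proof (exp_ineq1 _ E); lra.
Qed.

Lemma Rabs_ln_le_rpow_0 z t : 0 < z -> z <= 1 -> 0 < t -> Rabs (ln z) <= 2 / t * rpow z (- t / 2).
Proof.
  intros Hz Hz1 Ht. assert (ln z <= 0) by (rewrite <- ln_1; apply ln_le; lra).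
  rewrite Rabs_left1 by auto.
  pose proof (ln_lt_exp_ln (rpow z (- t / 2))) as H1. unfold rpow in H1 at 1. rewrite ln_exp in H1.
  unfold rpow in *.
  assert (- t / 2 * ln z = (t/2) * (- ln z)) by field. rewrite H0 in H1.
  rewrite exp_ln in H1 by apply exp_pos. rewrite <- H0 in H1.
  apply (Rmult_le_reg_l (t / 2)); [lra|].
  replace (t / 2 * (2 / t * exp (- t / 2 * ln z))) with (exp (- t / 2 * ln z)) by (field; lra). lra.
Qed.

Lemma Rabs_ln_le_rpow_pinfty z t : 1 <= z -> 0 < t -> Rabs (ln z) <= 2 / t * rpow z (t / 2).
Proof.
  intros Hz Ht. assert (0 <= ln z) by (rewrite <- ln_1; apply ln_le; lra).
  rewrite Rabs_right by lra.
  pose proof (ln_lt_exp_ln (rpow z (t / 2))) as H1. unfold rpow in *. rewrite ln_exp in H1.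
  apply (Rmult_le_reg_l (t / 2)); [lra|].
  replace (t / 2 * (2 / t * exp (t / 2 * ln z))) with (exp (t / 2 * ln z)) by (field; lra). lra.
Qed.

Lemma INR_fact_ge1 n : 1 <= INR (fact n).
Proof. replace 1 with (INR 1) by auto. apply le_INR. apply lt_O_fact. Qed.

Lemma cpow_inv y b : 0 < y -> cpow (/ y) b = cpow y (Copp b).
Proof.
  intros Hy; unfold cpow. rewrite ln_Rinv by auto. apply C_ext; unfold Re, Im; simpl; f_equal; f_equal; ring.
Qed.

Lemma cpow_mul_inv_pow y a n : 0 < y ->
  Cmult (cpow y a) (RtoC ((/ y) ^ n)) = cpow y (Cminus a (RtoC (INR n))).
Proof.
  intros Hy.
  replace (cpow y a) with (cpow y (Cplus (Cminus a (RtoC (INR n))) (RtoC (INR n)))) by (f_equal; ring).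
  rewrite cpow_plus, cpow_nat by auto. rewrite <- Rinv_pow by lra.
  assert (y ^ n <> 0) by (apply pow_nonzero; lra).
  transitivity (Cmult (cpow y (Cminus a (RtoC (INR n)))) (RtoC (y ^ n * / y ^ n))).
  - apply C_ext; unfold Re, Im; simpl; ring.
  - rewrite Rinv_r by auto. apply C_ext; unfold Re, Im; simpl; ring.
Qed.

Lemma cpow_div b z be : 0 < b -> 0 < z -> cpow (b / z) be = Cmult (cpow b be) (cpow z (Copp be)).
Proof.
  intros; unfold Rdiv. rewrite cpow_mult, cpow_inv; auto. apply Rinv_0_lt_compat; auto.
Qed.

Definition prim_pow (b : C) (c : R) : C :=
  if excluded_middle_informative (b = RtoC 0) then RtoC (ln c) else Cmult (cpow c b) (Cinv b).

Lemma is_derive_C_prim_pow b y : 0 < y -> is_derive_C (prim_pow b) y (Cmult (cpow y b) (RtoC (/ y))).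
Proof.
  intros Hy. unfold prim_pow. destruct (excluded_middle_informative (b = RtoC 0)) as [E|E].
  - subst. rewrite cpow_0. replace (Cmult (RtoC 1) (RtoC (/ y))) with (RtoC (/ y)) by ring.
    eapply is_derive_C_ext; [|apply is_derive_C_ln; auto]. intros; auto.
  - eapply is_derive_C_ext; [intros t; rewrite Cmult_comm; reflexivity|].
    replace (Cmult (cpow y b) (RtoC (/ y))) with (Cmult (Cinv b) (Cmult (Cmult b (cpow y b)) (RtoC (/ y)))).
    + apply is_derive_C_scal, is_derive_C_cpow; auto.
    + field; auto.
Qed.

Lemma exists_nat_gt (r : R) : exists N : nat, r < INR N.
Proof. destruct (INR_archimed 1 r) as [n Hn]; [lra|]. exists n; lra. Qed.

Lemma is_LIM_eq F g c1 c2 : c1 = c2 -> is_LIM F g c1 -> is_LIM F g c2.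
Proof. intros; subst; auto. Qed.

Lemma is_derive_rpow_div (M s y : R) : 0 < y -> s <> 0 ->
  is_derive (fun t => M * rpow t s / s) y (M * rpow y (s - 1)).
Proof.
  intros Hy Hs. unfold rpow. auto_derive; [lra|].
  replace ((s - 1) * ln y) with (s * ln y + - ln y) by ring.
  rewrite exp_plus, exp_Ropp, exp_ln by lra. field; lra.
Qed.

Lemma tends0_rpow_pinfty (a K : R) (g : R -> C) : a < 0 -> 0 <= K ->
  Rbar_locally p_infty (fun z => Cmod (g z) <= K * rpow z a) -> tends0 (Rbar_locally p_infty) g.
Proof.
  intros Ha HK Hg. apply (tends0_le _ g (fun z => K * rpow z a)); auto.
  intros eps Heps. destruct (Req_dec K 0) as [Z|NZ].
  - exists 0. intros c _. rewrite Z, Rmult_0_l; auto.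
  - destruct (rpow_small_pinfty a Ha (eps / K)) as [M HM]; [apply Rdiv_lt_0_compat; lra|].
    exists M. intros c Hc. specialize (HM c ltac:(lra)).
    apply (Rmult_lt_compat_l K) in HM; [|lra].
    replace (K * (eps / K)) with eps in HM by (field; lra). auto.
Qed.

Lemma tends0_rpow_0 (a : R) (K : R) : 0 < a -> 0 <= K ->
  forall g : R -> Complex.C, at_right 0 (fun z => Cmod (g z) <= K * rpow z a) ->
  tends0 (at_right 0) g.
Proof.
  intros Ha HK g Hg. apply (tends0_le _ g (fun z => K * rpow z a)); auto.
  intros eps Heps. destruct (Req_dec K 0) as [Z|NZ].
  - apply at_right_0_iff. exists 1. split; [lra|]. intros c _. rewrite Z, Rmult_0_l; auto.
  - destruct (rpow_small_0 a Ha (eps / K)) as (d & Hd & HM); [apply Rdiv_lt_0_compat; lra|].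
    apply at_right_0_iff. exists d. split; auto. intros c Hc. specialize (HM c Hc).
    apply (Rmult_lt_compat_l K) in HM; [|lra].
    replace (K * (eps / K)) with eps in HM by (field; lra). auto.
Qed.

Lemma pow_div b z n : 0 < z -> (b / z) ^ n = b ^ n * (/ z) ^ n.
Proof. intros; unfold Rdiv; apply Rpow_mult_distr. Qed.

Lemma is_LIM_cpow_sub_nat F {FF : Filter F} a ga n :
  is_LIM F (fun z => Cmult a (cpow z (Cminus ga (RtoC (INR n)))))
    (if excluded_middle_informative (ga = RtoC (INR n)) then a else RtoC 0).
Proof.
  destruct (excluded_middle_informative (ga = RtoC (INR n))) as [E|E].
  - apply (is_LIM_ext _ (fun _ => a)); [|apply is_LIM_const; auto].
    apply filter_forall; intros z. subst ga.
    replace (Cminus (RtoC (INR n)) (RtoC (INR n))) with (RtoC 0) by (apply C_ext; unfold Re, Im; simpl; ring).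
    rewrite cpow_0. ring.
  - apply (is_LIM_ext _ (fun z => Cmult a (Cmult (cpow z (Cminus ga (RtoC (INR n)))) (RtoC (ln z ^ 0))))).
    + apply filter_forall; intros z. simpl. ring.
    + apply is_LIM_pow_log_term; auto. intros Z. apply E.
      transitivity (Cplus (Cminus ga (RtoC (INR n))) (RtoC (INR n))); [ring|rewrite Z; ring].
Qed.

(** * Asymptotics of the integral of a slice *)

Section Slices.
Variables (G H : nat -> R -> C) (e : R) (alpha : C).
Hypothesis He : 0 < e.
Hypothesis HG : forall j y, -e < y -> is_derive_C (G j) y (G (S j) y).
Hypothesis HH : forall i x, -e < x -> is_derive_C (H i) x (H (S i) x).
Hypothesis Hhom : forall y, 0 < y -> G O y = Cmult (cpow y alpha) (H O (/ y)).

(* [G j] and [H i] stand for [d_y^j f(1,.)] and [d_x^i f(.,1)]; [int1_rem N] is [int1] minus the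
   first [N] terms of its expansion at infinity, with coefficients [hcoef] and exponents [hexp]. *)

Definition int1 c := RInt_C (G O) 1 c.
Definition int0 c := RInt_C (G O) 0 c.

Lemma int1_split c : -e < c -> int1 c = Cplus (int1 0) (int0 c).
Proof.
  intros Hc. unfold int1, int0. symmetry. apply (RInt_C_Chasles (G O) (G 1%nat) (-e)); auto; lra.
Qed.

Lemma RInt_int1 c r : -e < c -> -e < r -> RInt_C (G O) c r = Cminus (int1 r) (int1 c).
Proof.
  intros Hc Hr. unfold int1. rewrite <- (RInt_C_Chasles (G O) (G 1%nat) (-e) 1 c r); auto; try lra. ring.
Qed.

Lemma is_derive_int1 c : -e < c -> is_derive_C int1 c (G O c).
Proof. intros; apply (is_derive_C_RInt (G O) (G 1%nat) (-e)); auto; lra. Qed.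

Lemma is_derive_int0 c : -e < c -> is_derive_C int0 c (G O c).
Proof. intros; apply (is_derive_C_RInt (G O) (G 1%nat) (-e)); auto; lra. Qed.

Lemma int0_taylor N : exists M, 0 <= M /\ forall c, 0 <= c <= 1 ->
  Cmod (Cminus (int0 c) (csum N (fun j => Cmult (G j 0) (RtoC (c ^ (S j) / INR (fact (S j))))))) <= M * c ^ (S N).
Proof.
  destruct (bounded_on_segment_C (G N) (G (S N)) 0 1) as (M & HM0 & HM); [lra| intros; apply HG; lra|].
  set (Gt := fun j => match j with O => int0 | S j => G j end).
  pose proof (taylor_remainder_le_C (S N) Gt 1 M ltac:(lra)) as T.
  exists (2 * M). split; [lra|]. intros c Hc.
  assert (E : taylor_poly_C Gt (S N) c = csum N (fun j => Cmult (G j 0) (RtoC (c ^ (S j) / INR (fact (S j)))))).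
  { unfold taylor_poly_C. rewrite csum_shift. simpl Gt. unfold int0. rewrite RInt_C_point. ring. }
  rewrite <- E. eapply Rle_trans; [apply T; auto|].
  - intros j y Hj Hy. destruct j; simpl.
    + apply is_derive_int0; lra.
    + apply HG; lra.
  - pose proof (INR_fact_ge1 (S N)). pose proof (pow_le c (S N) ltac:(lra)).
    assert (M * c ^ S N / INR (fact (S N)) <= M * c ^ S N).
    { unfold Rdiv. rewrite <- (Rmult_1_r (M * c ^ S N)) at 2. apply Rmult_le_compat_l; [nra|].
      rewrite <- Rinv_1. apply Rinv_le_contravar; lra. }
    lra.
Qed.

Lemma H0_taylor N : exists M, 0 <= M /\ forall x, 0 <= x <= 1 ->
  Cmod (Cminus (H O x) (taylor_poly_C H N x)) <= M * x ^ N.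
Proof.
  destruct (bounded_on_segment_C (H N) (H (S N)) 0 1) as (M & HM0 & HM); [lra| intros; apply HH; lra|].
  exists (2 * M). split; [lra|]. intros x Hx.
  eapply Rle_trans; [apply (taylor_remainder_le_C N H 1 M); auto; [lra|intros; apply HH; lra]|].
  pose proof (INR_fact_ge1 N). pose proof (pow_le x N ltac:(lra)).
  assert (M * x ^ N / INR (fact N) <= M * x ^ N).
  { unfold Rdiv. rewrite <- (Rmult_1_r (M * x ^ N)) at 2. apply Rmult_le_compat_l; [nra|].
    rewrite <- Rinv_1. apply Rinv_le_contravar; lra. }
  lra.
Qed.

Definition hcoef j := Cmult (H j 0) (RtoC (/ INR (fact j))).
Definition hexp j := Cplus (Cminus alpha (RtoC (INR j))) (RtoC 1).
Definition int1_rem N c := Cminus (int1 c) (csum N (fun j => Cmult (hcoef j) (prim_pow (hexp j) c))).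

Lemma hcoef_term y j : 0 < y ->
  Cmult (hcoef j) (Cmult (cpow y (hexp j)) (RtoC (/ y))) =
  Cmult (cpow y alpha) (Cmult (H j 0) (RtoC ((/ y) ^ j / INR (fact j)))).
Proof.
  intros Hy. unfold hcoef, hexp.
  rewrite cpow_plus, cpow_1 by auto.
  transitivity (Cmult (Cmult (H j 0) (RtoC (/ INR (fact j)))) (Cmult (cpow y (Cminus alpha (RtoC (INR j)))) (RtoC (y * / y)))).
  - apply C_ext; unfold Re, Im; simpl; ring.
  - rewrite <- cpow_mul_inv_pow by auto. rewrite Rinv_r by lra.
    apply C_ext; unfold Re, Im; simpl; unfold Rdiv; ring.
Qed.

Lemma is_derive_int1_rem N y : 0 < y -> is_derive_C (int1_rem N) y (Cmult (cpow y alpha) (Cminus (H O (/ y)) (taylor_poly_C H N (/ y)))).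
Proof.
  intros Hy. unfold int1_rem.
  replace (Cmult (cpow y alpha) (Cminus (H O (/ y)) (taylor_poly_C H N (/ y)))) with
    (Cminus (G O y) (csum N (fun j => Cmult (hcoef j) (Cmult (cpow y (hexp j)) (RtoC (/ y)))))).
  - apply is_derive_C_minus; [apply is_derive_int1; lra|]. apply is_derive_C_csum. intros j Hj. apply is_derive_C_scal, is_derive_C_prim_pow; auto.
  - rewrite Hhom by auto. unfold taylor_poly_C.
    rewrite (csum_ext _ _ (fun j => Cmult (cpow y alpha) (Cmult (H j 0) (RtoC ((/ y) ^ j / INR (fact j)))))).
    + rewrite csum_scal. ring.
    + intros; apply hcoef_term; auto.
Qed.

Lemma int1_rem_cauchy N : Re alpha - INR N < -1 ->
  exists L K', 0 <= K' /\ forall c, 1 <= c -> Cmod (Cminus (int1_rem N c) L) <= K' * rpow c (Re alpha - INR N + 1).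
Proof.
  intros HN. set (s1 := Re alpha - INR N + 1). assert (Hs1 : s1 < 0) by (unfold s1; lra).
  destruct (H0_taylor N) as (MH & HM0 & HM).
  set (w := fun c => 2 * (MH / (- s1)) * rpow c s1).
  destruct (cauchy_pinfty_C (int1_rem N) w) as [L HL].
  - intros c1 c2 Hc.
    assert (D2 : forall x, c1 <= x <= c2 -> is_derive (fun y => MH * rpow y s1 / s1) x (MH * rpow x (s1 - 1))).
    { intros x Hx. apply is_derive_rpow_div; lra. }
    assert (D3 : forall x, c1 <= x <= c2 ->
       Cmod (Cmult (cpow x alpha) (Cminus (H O (/ x)) (taylor_poly_C H N (/ x)))) <= MH * rpow x (s1 - 1)).
    { intros x Hx. rewrite Cmod_mult, Cmod_cpow.
      assert (Hx0 : 0 < x) by lra.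
      assert (Hix : 0 <= / x <= 1) by (split; [left; apply Rinv_0_lt_compat; lra|rewrite <- Rinv_1; apply Rinv_le_contravar; lra]).
      eapply Rle_trans; [apply Rmult_le_compat_l; [left; apply rpow_pos|apply HM; auto]|].
      rewrite rpow_inv_pow by auto.
      replace (rpow x (Re alpha) * (MH * rpow x (- INR N))) with (MH * (rpow x (Re alpha) * rpow x (- INR N))) by ring.
      rewrite rpow_plus. replace (Re alpha + - INR N) with (s1 - 1) by (unfold s1; ring). lra. }
    pose proof (Cmod_sub_le_of_derive (int1_rem N) (fun y => Cmult (cpow y alpha) (Cminus (H O (/ y)) (taylor_poly_C H N (/ y))))
       (fun y => MH * rpow y s1 / s1) (fun y => MH * rpow y (s1 - 1)) c1 c2 ltac:(lra)
       ltac:(intros; apply is_derive_int1_rem; lra) D2 D3) as C.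
    simpl in C. eapply Rle_trans; [apply C|].
    unfold w. pose proof (rpow_pos c1 s1). pose proof (rpow_pos c2 s1).
    assert (MH * rpow c2 s1 / s1 <= 0).
    { assert (/ s1 < 0) by (apply Rinv_lt_0_compat; auto). unfold Rdiv.
      assert (0 <= MH * rpow c2 s1) by nra. nra. }
    replace (2 * (MH / - s1) * rpow c1 s1) with (2 * (- (MH * rpow c1 s1 / s1))) by (field; lra). lra.
  - intros eps Heps.
    destruct (Req_dec MH 0) as [Z|NZ].
    + exists 0. intros c _. unfold w. rewrite Z. unfold Rdiv. rewrite Rmult_0_l, Rmult_0_r, Rmult_0_l. auto.
    + assert (Hk : 0 < 2 * (MH / - s1)) by (apply Rmult_lt_0_compat; [lra|apply Rdiv_lt_0_compat; lra]).
      destruct (rpow_small_pinfty s1 Hs1 (eps / (2 * (MH / - s1)))) as [M HM'].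
      { apply Rdiv_lt_0_compat; auto. }
      exists M. intros c Hc. unfold w. specialize (HM' c Hc).
      apply (Rmult_lt_compat_l (2 * (MH / - s1))) in HM'; auto.
      replace (2 * (MH / - s1) * (eps / (2 * (MH / - s1)))) with eps in HM' by (field; lra). lra.
  - exists L, (2 * (2 * (MH / - s1))). split.
    + assert (0 <= MH / - s1) by (apply Rmult_le_pos; [lra|left; apply Rinv_0_lt_compat; lra]). lra.
    + intros c Hc. specialize (HL c Hc). unfold w in HL. fold s1. lra.
Qed.

Lemma is_LIM_prim_pow F {FF : Filter F} a b : is_LIM F (fun x => Cmult a (prim_pow b x)) (RtoC 0).
Proof.
  unfold prim_pow. destruct (excluded_middle_informative (b = RtoC 0)) as [E|E].
  - apply (is_LIM_ext F (fun x => Cmult a (RtoC (ln x ^ 1)))).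
    + apply filter_forall; intros; rewrite pow_1; auto.
    + apply is_LIM_log_term; auto.
  - apply (is_LIM_ext F (fun x => Cmult (Cmult a (Cinv b)) (Cmult (cpow x b) (RtoC (ln x ^ 0))))).
    + apply filter_forall; intros; simpl. ring.
    + apply is_LIM_pow_log_term; auto.
Qed.

Lemma is_LIM_int1_of_expansion N L K' : Re alpha - INR N < -1 -> 0 <= K' ->
  (forall c, 1 <= c -> Cmod (Cminus (int1_rem N c) L) <= K' * rpow c (Re alpha - INR N + 1)) ->
  is_LIM (Rbar_locally p_infty) int1 L.
Proof.
  intros HN HK0 HL. assert (FF : Filter (Rbar_locally p_infty)) by apply Rbar_locally_filter.
  apply (is_LIM_ext _ (fun c => Cplus (csum N (fun j => Cmult (hcoef j) (prim_pow (hexp j) c)))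
                                      (Cplus L (Cminus (int1_rem N c) L)))).
  - apply filter_forall; intros c. unfold int1_rem. ring.
  - apply (is_LIM_eq _ _ (Cplus (csum N (fun _ => RtoC 0)) (Cplus L (RtoC 0)))); [rewrite csum_zero; ring|].
    apply is_LIM_plus; auto.
    + apply is_LIM_csum; auto. intros; apply is_LIM_prim_pow; auto.
    + apply is_LIM_plus, is_LIM_of_tends0; auto; [apply is_LIM_const; auto|].
      apply (tends0_rpow_pinfty (Re alpha - INR N + 1) K'); auto; [lra|].
      exists 1. intros c Hc. replace (Cminus (Cminus (int1_rem N c) L) (RtoC 0)) with (Cminus (int1_rem N c) L)
        by ring. apply HL; lra.
Qed.

Definition int1_lim := LIM_infty int1.

Lemma int1_expansion N : Re alpha - INR N < -1 ->
  exists K', 0 <= K' /\ forall c, 1 <= c ->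
    Cmod (Cminus (int1_rem N c) int1_lim) <= K' * rpow c (Re alpha - INR N + 1).
Proof.
  intros HN. destruct (int1_rem_cauchy N HN) as (L & K' & HK0 & HL).
  replace int1_lim with L; [eauto|].
  symmetry; apply LIM_infty_eq, (is_LIM_int1_of_expansion N L K'); auto.
Qed.

Lemma is_LIM_int1 : is_LIM (Rbar_locally p_infty) int1 int1_lim.
Proof.
  destruct (exists_nat_gt (Re alpha + 1)) as [N HN].
  destruct (int1_expansion N ltac:(lra)) as (K' & HK0 & HK).
  apply (is_LIM_int1_of_expansion N int1_lim K'); auto; lra.
Qed.

Lemma reg_int_slice g : (forall y, 0 < y -> g y = G O y) -> forall c, 0 < c -> reg_int g c = Cminus int1_lim (int1 c).
Proof.
  intros Hg c Hc. unfold reg_int. apply LIM_infty_eq.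
  apply (is_LIM_ext _ (fun r => Cplus (int1 r) (Cmult (Copp (RtoC 1)) (int1 c)))).
  - exists 0. intros r Hr. rewrite (RInt_C_ext g (G O)).
    + rewrite RInt_int1 by lra. ring.
    + intros t Ht. apply Hg. pose proof (Rmin_glb_lt c r 0 Hc Hr). lra.
  - replace (Cminus int1_lim (int1 c)) with (Cplus int1_lim (Cmult (Copp (RtoC 1)) (int1 c))) by ring.
    apply is_LIM_plus; [apply Rbar_locally_filter|apply is_LIM_int1|].
    apply is_LIM_const; apply Rbar_locally_filter.
Qed.

Lemma is_LIM_reg_int F {FF : Filter F} (g w : R -> C) b c : 0 < b -> F (fun z => 0 < z) ->
  (forall y, 0 < y -> g y = G O y) ->
  is_LIM F (fun z => Cmult (w z) (Cminus int1_lim (int1 (b / z)))) c ->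
  is_LIM F (fun z => Cmult (w z) (reg_int g (b / z))) c.
Proof.
  intros Hb Hpos Hg. apply is_LIM_ext; auto. revert Hpos; apply filter_imp; intros z Hz.
  rewrite (reg_int_slice g Hg); auto. apply Rdiv_lt_0_compat; auto.
Qed.




Definition int0_taylor_rem N c :=
  Cminus (int0 c) (csum N (fun j => Cmult (G j 0) (RtoC (c ^ (S j) / INR (fact (S j)))))).

Lemma tends0_int0_taylor_rem b N ga : 0 < b -> Re ga < INR N + 1 ->
  tends0 (Rbar_locally p_infty) (fun z => Cmult (cpow z ga) (int0_taylor_rem N (b / z))).
Proof.
  intros Hb HN. destruct (int0_taylor N) as (M & HM0 & HM).
  apply (tends0_rpow_pinfty (Re ga - INR (S N)) (M * b ^ (S N))).
  - rewrite S_INR. lra.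
  - apply Rmult_le_pos; auto. apply pow_le; lra.
  - exists b. intros z Hz. assert (Hz0 : 0 < z) by lra.
    rewrite Cmod_mult, Cmod_cpow.
    assert (Hbz : 0 <= b / z <= 1).
    { split; [left; apply Rdiv_lt_0_compat; auto|]. apply (Rmult_le_reg_r z); auto.
      unfold Rdiv; rewrite Rmult_assoc, Rinv_l, Rmult_1_r, Rmult_1_l by lra. lra. }
    eapply Rle_trans; [apply Rmult_le_compat_l; [left; apply rpow_pos|apply HM; auto]|].
    rewrite pow_div, rpow_inv_pow by auto.
    replace (rpow z (Re ga) * (M * (b ^ S N * rpow z (- INR (S N))))) with
      (M * b ^ S N * (rpow z (Re ga) * rpow z (- INR (S N)))) by ring.
    rewrite rpow_plus. right. f_equal.
Qed.

(* [int1 (b/z) = int1 0 + int0 (b/z)], and the Taylor terms of [int0 (b/z)] give the powers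
   [z^(alpha+2-(j+1))]: only a resonant one, with exponent 0, contributes to the limit. *)
Lemma reg_tail_pinfty b (Hb : 0 < b) N (Hg : Cplus alpha (RtoC 2) <> RtoC 0)
  (HN : Re (Cplus alpha (RtoC 2)) < INR N + 1) :
  is_LIM (Rbar_locally p_infty)
    (fun z => Cmult (cpow z (Cplus alpha (RtoC 2))) (Cminus int1_lim (int1 (b / z))))
    (Copp (csum N (fun j => if excluded_middle_informative (Cplus alpha (RtoC 2) = RtoC (INR (S j)))
                            then Cmult (G j 0) (RtoC (b ^ (S j) / INR (fact (S j)))) else RtoC 0))).
Proof.
  assert (FF : Filter (Rbar_locally p_infty)) by apply Rbar_locally_filter.
  set (ga := Cplus alpha (RtoC 2)).
  set (a := fun j => Cmult (G j 0) (RtoC (b ^ (S j) / INR (fact (S j))))).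
  apply (is_LIM_ext _ (fun z => Cplus (Cmult (Cminus int1_lim (int1 0)) (Cmult (cpow z ga) (RtoC (ln z ^ 0))))
     (Cplus (Cmult (Copp (RtoC 1)) (csum N (fun j => Cmult (a j) (cpow z (Cminus ga (RtoC (INR (S j))))))))
            (Cmult (Copp (RtoC 1)) (Cmult (cpow z ga) (int0_taylor_rem N (b / z))))))).
  - exists b. intros z Hz. assert (Hz0 : 0 < z) by lra.
    assert (Hbz : 0 < b / z) by (apply Rdiv_lt_0_compat; auto).
    rewrite (int1_split (b / z)) by lra. unfold int0_taylor_rem.
    assert (E : csum N (fun j => Cmult (a j) (cpow z (Cminus ga (RtoC (INR (S j)))))) =
                Cmult (cpow z ga) (csum N (fun j => Cmult (G j 0) (RtoC ((b / z) ^ (S j) / INR (fact (S j))))))).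
    { rewrite <- csum_scal. apply csum_ext. intros j _. unfold a.
      rewrite <- cpow_mul_inv_pow, pow_div by auto.
      apply C_ext; unfold Re, Im; simpl; unfold Rdiv; ring. }
    rewrite E. apply C_ext; unfold Re, Im; simpl; ring.
  - apply (is_LIM_eq _ _ (Cplus (RtoC 0) (Cplus (Cmult (Copp (RtoC 1))
             (csum N (fun j => if excluded_middle_informative (ga = RtoC (INR (S j))) then a j else RtoC 0)))
             (Cmult (Copp (RtoC 1)) (RtoC 0))))).
    { unfold a, ga. ring. }
    apply is_LIM_plus; [auto|apply is_LIM_pow_log_term; auto|].
    apply is_LIM_plus; auto; apply is_LIM_scal; auto.
    + apply is_LIM_csum; auto. intros j _. apply is_LIM_cpow_sub_nat; auto.
    + apply is_LIM_of_tends0; auto.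
      apply (tends0_ext _ (fun z => Cmult (cpow z ga) (int0_taylor_rem N (b / z)))).
      * apply filter_forall; intros z. ring.
      * apply tends0_int0_taylor_rem; auto.
Qed.

Lemma int1_rem_tail_bound b N : 0 < b -> Re alpha - INR N < -1 ->
  exists K, 0 <= K /\ forall z, 0 < z <= b ->
    Cmod (Cminus (int1_rem N (b / z)) int1_lim) <= K * rpow z (- (Re alpha - INR N + 1)).
Proof.
  intros Hb HN. destruct (int1_expansion N HN) as (K' & HK0 & HK).
  exists (K' * rpow b (Re alpha - INR N + 1)). split.
  - apply Rmult_le_pos; auto. left; apply rpow_pos.
  - intros z Hz.
    assert (Hbz : 1 <= b / z).
    { apply (Rmult_le_reg_r z); [lra|]. unfold Rdiv; rewrite Rmult_assoc, Rinv_l, Rmult_1_r, Rmult_1_l by lra. lra. }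
    eapply Rle_trans; [apply HK; auto|]. rewrite rpow_div by lra. right; ring.
Qed.

Lemma is_LIM_0_prim_pow_term b (Hb : 0 < b) j (Hg : Cplus alpha (RtoC 2) <> RtoC 0) :
  is_LIM (at_right 0) (fun z => Cmult (hcoef j) (Cmult (cpow z (Cplus alpha (RtoC 2))) (prim_pow (hexp j) (b / z)))) (RtoC 0).
Proof.
  set (ga := Cplus alpha (RtoC 2)).
  assert (FF : Filter (at_right 0)) by (apply at_right_proper_filter).
  pose proof at_right_0_pos as Hpos.
  unfold prim_pow. destruct (excluded_middle_informative (hexp j = RtoC 0)) as [E|E].
  - apply (is_LIM_ext _ (fun z => Cplus (Cmult (Cmult (hcoef j) (RtoC (ln b))) (Cmult (cpow z ga) (RtoC (ln z ^ 0))))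
                                      (Cmult (Copp (hcoef j)) (Cmult (cpow z ga) (RtoC (ln z ^ 1)))))).
    + revert Hpos; apply filter_imp; intros z Hz. unfold Rdiv. rewrite ln_mult, ln_Rinv by (auto; apply Rinv_0_lt_compat; auto).
      apply C_ext; unfold Re, Im; simpl; ring.
    + apply (is_LIM_eq _ _ (Cplus (RtoC 0) (RtoC 0))); [ring|].
      apply is_LIM_plus; auto; apply is_LIM_pow_log_term; auto.
  - apply (is_LIM_ext _ (fun z => Cmult (Cmult (Cmult (hcoef j) (cpow b (hexp j))) (Cinv (hexp j)))
                                      (Cmult (cpow z (Cminus ga (hexp j))) (RtoC (ln z ^ 0))))).
    + revert Hpos; apply filter_imp; intros z Hz. rewrite cpow_div by auto.
      replace (Cminus ga (hexp j)) with (Cplus ga (Copp (hexp j))) by ring. rewrite cpow_plus. simpl. ring.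
    + apply is_LIM_pow_log_term; auto. intros Z.
      assert (Re (Cminus ga (hexp j)) = INR j + 1) by (unfold ga, hexp; unfold Re, Im; simpl; ring).
      rewrite Z in H0. simpl in H0. pose proof (pos_INR j). lra.
Qed.

Lemma reg_tail_0 b (Hb : 0 < b) N (HN : Re alpha - INR N < -1) (Hg : Cplus alpha (RtoC 2) <> RtoC 0) :
  is_LIM (at_right 0) (fun z => Cmult (cpow z (Cplus alpha (RtoC 2))) (Cminus int1_lim (int1 (b / z)))) (RtoC 0).
Proof.
  set (ga := Cplus alpha (RtoC 2)).
  assert (FF : Filter (at_right 0)) by (apply at_right_proper_filter).
  destruct (int1_rem_tail_bound b N Hb HN) as (K & HK0 & HK).
  set (Rm := fun z => Cminus (int1_rem N (b / z)) int1_lim).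
  apply (is_LIM_ext _ (fun z => Cplus (Cmult (Copp (RtoC 1)) (csum N (fun j => Cmult (hcoef j) (Cmult (cpow z ga) (prim_pow (hexp j) (b / z))))))
                                      (Cmult (Copp (RtoC 1)) (Cmult (cpow z ga) (Rm z))))).
  - apply filter_forall; intros z. unfold Rm, int1_rem.
    rewrite (csum_ext _ _ (fun j => Cmult (cpow z ga) (Cmult (hcoef j) (prim_pow (hexp j) (b / z))))) by (intros; ring).
    rewrite csum_scal. ring.
  - apply (is_LIM_eq _ _ (Cplus (Cmult (Copp (RtoC 1)) (csum N (fun _ => RtoC 0))) (Cmult (Copp (RtoC 1)) (RtoC 0)))).
    { rewrite csum_zero. ring. }
    apply is_LIM_plus; auto; apply is_LIM_scal; auto.
    + apply is_LIM_csum; auto. intros; apply is_LIM_0_prim_pow_term; auto.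
    + apply is_LIM_of_tends0; auto.
      apply (tends0_rpow_0 (INR N + 1) K); [pose proof (pos_INR N); lra|auto|].
      apply at_right_0_iff. exists b. split; auto. intros z Hz.
      replace (Cminus (Cmult (cpow z ga) (Rm z)) (RtoC 0)) with (Cmult (cpow z ga) (Rm z)) by ring.
      rewrite Cmod_mult, Cmod_cpow.
      eapply Rle_trans; [apply Rmult_le_compat_l; [left; apply rpow_pos|apply HK; lra]|].
      replace (rpow z (Re ga) * (K * rpow z (- (Re alpha - INR N + 1))))
        with (K * (rpow z (Re ga) * rpow z (- (Re alpha - INR N + 1)))) by ring.
      rewrite rpow_plus. right. f_equal. f_equal. unfold ga, Re; simpl; ring.
Qed.

Lemma is_LIM_0_ln_prim_pow_term b (Hb : 0 < b) j (Hre : Re alpha = -2) :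
  is_LIM (at_right 0) (fun z => Cmult (hcoef j) (Cmult (RtoC (ln z)) (prim_pow (hexp j) (b / z)))) (RtoC 0).
Proof.
  assert (FF : Filter (at_right 0)) by (apply at_right_proper_filter).
  assert (Hbj : Re (hexp j) = - INR j - 1) by (unfold hexp; unfold Re at 1; simpl; fold (Re alpha); rewrite Hre; ring).
  unfold prim_pow. destruct (excluded_middle_informative (hexp j = RtoC 0)) as [E|E].
  { exfalso. rewrite E in Hbj. simpl in Hbj. pose proof (pos_INR j). lra. }
  apply (is_LIM_ext _ (fun z => Cmult (Cmult (Cmult (hcoef j) (cpow b (hexp j))) (Cinv (hexp j)))
                                    (Cmult (cpow z (Copp (hexp j))) (RtoC (ln z ^ 1))))).
  - apply (filter_imp (fun z => 0 < z)); [|apply at_right_0_pos]. intros z Hz. rewrite cpow_div by auto.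
    simpl. apply C_ext; unfold Re, Im; simpl; ring.
  - apply is_LIM_pow_log_term; auto. intros Z.
    assert (Re (Copp (hexp j)) = INR j + 1)
      by (replace (Re (Copp (hexp j))) with (- Re (hexp j)) by (unfold Re; simpl; ring); rewrite Hbj; ring).
    assert (Re (Copp (hexp j)) = 0) by (rewrite Z; auto). pose proof (pos_INR j). lra.
Qed.

Lemma reg_tail_ln_0 b (Hb : 0 < b) N (HN : Re alpha - INR N < -1) (Hre : Re alpha = -2) :
  is_LIM (at_right 0) (fun z => Cmult (RtoC (ln z)) (Cminus int1_lim (int1 (b / z)))) (RtoC 0).
Proof.
  assert (FF : Filter (at_right 0)) by (apply at_right_proper_filter).
  destruct (int1_rem_tail_bound b N Hb HN) as (K & HK0 & HK).
  set (Rm := fun z => Cminus (int1_rem N (b / z)) int1_lim).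
  apply (is_LIM_ext _ (fun z => Cplus (Cmult (Copp (RtoC 1)) (csum N (fun j => Cmult (hcoef j) (Cmult (RtoC (ln z)) (prim_pow (hexp j) (b / z))))))
                                      (Cmult (Copp (RtoC 1)) (Cmult (RtoC (ln z)) (Rm z))))).
  - apply filter_forall; intros z. unfold Rm, int1_rem.
    rewrite (csum_ext _ _ (fun j => Cmult (RtoC (ln z)) (Cmult (hcoef j) (prim_pow (hexp j) (b / z))))) by (intros; ring).
    rewrite csum_scal. ring.
  - apply (is_LIM_eq _ _ (Cplus (Cmult (Copp (RtoC 1)) (csum N (fun _ => RtoC 0))) (Cmult (Copp (RtoC 1)) (RtoC 0)))).
    { rewrite csum_zero. ring. }
    apply is_LIM_plus; auto; apply is_LIM_scal; auto.
    + apply is_LIM_csum; auto. intros j _. apply is_LIM_0_ln_prim_pow_term; auto.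
    + apply is_LIM_of_tends0; auto.
      set (t := INR N + 1). assert (Ht : 0 < t) by (unfold t; pose proof (pos_INR N); lra).
      apply (tends0_rpow_0 (t / 2) (2 / t * K)); [lra|apply Rmult_le_pos; auto; apply Rdiv_le_0_compat; lra|].
      apply at_right_0_iff. exists (Rmin b 1). split; [apply Rmin_glb_lt; lra|]. intros z Hz.
      pose proof (Rmin_l b 1). pose proof (Rmin_r b 1).
      replace (Cminus (Cmult (RtoC (ln z)) (Rm z)) (RtoC 0)) with (Cmult (RtoC (ln z)) (Rm z)) by ring.
      rewrite Cmod_mult, Cmod_R.
      pose proof (Rabs_ln_le_rpow_0 z t ltac:(lra) ltac:(lra) Ht) as Hl.
      pose proof (HK z ltac:(lra)) as HR. fold (Rm z) in HR.
      replace (- (Re alpha - INR N + 1)) with t in HR by (unfold t; rewrite Hre; ring).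
      pose proof (Cmod_ge_0 (Rm z)). pose proof (Rabs_pos (ln z)).
      eapply Rle_trans; [apply Rmult_le_compat; eauto|].
      replace (2 / t * rpow z (- t / 2) * (K * rpow z t)) with (2 / t * K * (rpow z (- t / 2) * rpow z t)) by ring.
      rewrite rpow_plus. right. f_equal. f_equal. field.
Qed.

Lemma reg_tail_ln_pinfty b (Hb : 0 < b) :
  is_LIM (Rbar_locally p_infty) (fun z => Cmult (RtoC (ln z)) (Cminus int1_lim (int1 (b / z)))) (RtoC 0).
Proof.
  assert (FF : Filter (Rbar_locally p_infty)) by (apply Rbar_locally_filter).
  destruct (int0_taylor 0) as (M & HM0 & HM).
  apply (is_LIM_ext _ (fun z => Cplus (Cmult (Cminus int1_lim (int1 0)) (RtoC (ln z ^ 1)))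
                                      (Cmult (Copp (RtoC 1)) (Cmult (RtoC (ln z)) (int0 (b / z)))))).
  - exists b. intros z Hz. assert (Hbz : 0 < b / z) by (apply Rdiv_lt_0_compat; lra).
    rewrite (int1_split (b / z)) by lra. apply C_ext; unfold Re, Im; simpl; ring.
  - apply (is_LIM_eq _ _ (Cplus (RtoC 0) (Cmult (Copp (RtoC 1)) (RtoC 0)))); [ring|].
    apply is_LIM_plus; auto; [apply is_LIM_log_term; auto|].
    apply is_LIM_scal; auto. apply is_LIM_of_tends0; auto.
    apply (tends0_rpow_pinfty (- / 2) (2 * (M * b))); [lra| |].
    + apply Rmult_le_pos; [lra|apply Rmult_le_pos; lra].
    + exists (Rmax b 1). intros z Hz. pose proof (Rmax_l b 1). pose proof (Rmax_r b 1).
      replace (Cminus (Cmult (RtoC (ln z)) (int0 (b / z))) (RtoC 0)) with (Cmult (RtoC (ln z)) (int0 (b / z))) by ring.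
      rewrite Cmod_mult, Cmod_R.
      assert (Hbz : 0 <= b / z <= 1).
      { split; [left; apply Rdiv_lt_0_compat; lra|]. apply (Rmult_le_reg_r z); [lra|].
        unfold Rdiv; rewrite Rmult_assoc, Rinv_l, Rmult_1_r, Rmult_1_l by lra. lra. }
      pose proof (HM (b / z) Hbz) as HP. simpl csum in HP.
      replace (Cminus (int0 (b / z)) (RtoC 0)) with (int0 (b / z)) in HP by ring.
      pose proof (Rabs_ln_le_rpow_pinfty z 1 ltac:(lra) ltac:(lra)) as Hl.
      pose proof (Cmod_ge_0 (int0 (b / z))). pose proof (Rabs_pos (ln z)).
      eapply Rle_trans; [apply Rmult_le_compat; eauto|].
      replace ((b / z) ^ 1) with (b * rpow z (-1)).
      * replace (2 / 1 * rpow z (1 / 2) * (M * (b * rpow z (-1)))) with (2 * (M * b) * (rpow z (1/2) * rpow z (-1))) by field.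
        rewrite rpow_plus. right. f_equal. f_equal. field.
      * rewrite pow_1. unfold Rdiv. f_equal. replace (-1) with (- INR 1) by (simpl; ring).
        rewrite <- rpow_inv_pow by lra. simpl; ring.
Qed.

End Slices.

(** * Slices of a smooth homogeneous function *)

Lemma smooth_quad_slices f : smooth_on quad f ->
  exists (G H : nat -> R -> C) e, 0 < e /\
    (forall j y, -e < y -> is_derive_C (G j) y (G (S j) y)) /\
    (forall i x, -e < x -> is_derive_C (H i) x (H (S i) x)) /\
    (forall y, 0 <= y -> f 1 y = G O y) /\
    (forall x, 0 <= x -> f x 1 = H O x).
Proof.
  intros (U & F & HU & [Uo (Dd & HD0 & HD)] & HF).
  assert (Q10 : quad (1, 0)) by (unfold quad; simpl; repeat split; try lra; intro E; injection E; lra).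
  assert (Q01 : quad (0, 1)) by (unfold quad; simpl; repeat split; try lra; intro E; injection E; lra).
  destruct (Uo _ (HU _ Q10)) as [e1 H1]. destruct (Uo _ (HU _ Q01)) as [e2 H2].
  set (e := Rmin e1 e2). assert (He : 0 < e) by (apply Rmin_glb_lt; apply cond_pos).
  assert (U1 : forall y, -e < y -> U (1, y)).
  { intros y Hy. destruct (Rle_or_lt 0 y) as [P|N].
    - apply HU. unfold quad; simpl; repeat split; try lra; intro E; injection E; lra.
    - apply H1. split; simpl.
      + apply ball_center.
      + apply ball_R_iff. rewrite Rabs_left by lra. pose proof (Rmin_l e1 e2). unfold e in Hy. lra. }
  assert (U2 : forall x, -e < x -> U (x, 1)).
  { intros x Hx. destruct (Rle_or_lt 0 x) as [P|N].
    - apply HU. unfold quad; simpl; repeat split; try lra; intro E; injection E; lra.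
    - apply H2. split; simpl.
      + apply ball_R_iff. rewrite Rabs_left by lra. pose proof (Rmin_r e1 e2). unfold e in Hx. lra.
      + apply ball_center. }
  exists (fun j y => Dd O j 1 y), (fun i x => Dd i O x 1), e. split; [auto|split; [|split; [|split]]].
  - intros j y Hy. apply (HD O j (1, y) (U1 y Hy)).
  - intros i x Hx. apply (HD i O (x, 1) (U2 x Hx)).
  - intros y Hy. assert (Q : quad (1, y)) by (unfold quad; simpl; repeat split; try lra; intro E; injection E; lra).
    pose proof (HF _ Q) as E1. pose proof (HD0 (1, y) (HU _ Q)) as E2. simpl in E1, E2. rewrite <- E1, E2. auto.
  - intros x Hx. assert (Q : quad (x, 1)) by (unfold quad; simpl; repeat split; try lra; intro E; injection E; lra).
    pose proof (HF _ Q) as E1. pose proof (HD0 (x, 1) (HU _ Q)) as E2. simpl in E1, E2. rewrite <- E1, E2. auto.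
Qed.

Lemma rderiv_eq g y (l : C) :
  filterlim (fun h => (Re (g (y + h)) - Re (g y)) / h) (at_right 0) (locally (Re l)) ->
  filterlim (fun h => (Im (g (y + h)) - Im (g y)) / h) (at_right 0) (locally (Im l)) ->
  rderiv g y = l.
Proof.
  intros H1 H2. unfold rderiv.
  destruct (epsilon_spec (inhabits (RtoC 0)) (fun l0 : C =>
    filterlim (fun h => (Re (g (y + h)) - Re (g y)) / h) (at_right 0) (locally (Re l0)) /\
    filterlim (fun h => (Im (g (y + h)) - Im (g y)) / h) (at_right 0) (locally (Im l0)))) as [E1 E2].
  { exists l; auto. }
  apply C_ext.
  - exact (@filterlim_locally_unique _ _ _ (at_right 0) (Proper_StrongProper _ (at_right_proper_filter 0)) _ _ _ E1 H1).
  - exact (@filterlim_locally_unique _ _ _ (at_right 0) (Proper_StrongProper _ (at_right_proper_filter 0)) _ _ _ E2 H2).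
Qed.

Lemma right_difference_quotient (u : R -> R) y d : is_derive u y d ->
  filterlim (fun h => (u (y + h) - u y) / h) (at_right 0) (locally d).
Proof.
  intros Hd. apply is_derive_Reals in Hd. apply filterlim_locally. intros eps.
  destruct (Hd eps (cond_pos eps)) as [del Hdel]. apply at_right_0_iff. exists del. split; [apply cond_pos|].
  intros h Hh. apply ball_R_iff. apply Hdel; [lra|]. rewrite Rabs_right; lra.
Qed.

Lemma rderiv_n_slice (g : R -> C) (G : nat -> R -> C) e : 0 < e ->
  (forall j y, -e < y -> is_derive_C (G j) y (G (S j) y)) ->
  (forall y, 0 <= y -> g y = G O y) ->
  forall j y, 0 <= y -> rderiv_n j g y = G j y.
Proof.
  intros He HG Hf. induction j; intros y Hy; simpl; auto.
  apply rderiv_eq.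
  - apply (filterlim_ext_loc (fun h => (Re (G j (y + h)) - Re (G j y)) / h)).
    + apply at_right_0_iff. exists 1. split; [lra|]. intros h Hh. rewrite !IHj; auto; lra.
    + apply (right_difference_quotient (fun t => Re (G j t))). apply (HG j y); lra.
  - apply (filterlim_ext_loc (fun h => (Im (G j (y + h)) - Im (G j y)) / h)).
    + apply at_right_0_iff. exists 1. split; [lra|]. intros h Hh. rewrite !IHj; auto; lra.
    + apply (right_difference_quotient (fun t => Im (G j t))). apply (HG j y); lra.
Qed.

Lemma RtoC_INR_inj i j : RtoC (INR i) = RtoC (INR j) -> i = j.
Proof. intros E. injection E; intros. apply INR_eq; auto. Qed.

Lemma homogeneous_slice f alpha y : homogeneous alpha f -> 0 < y ->
  f 1 y = Cmult (cpow y alpha) (f (/ y) 1).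
Proof.
  intros Hhom Hy.
  assert (Q : quad (/ y, 1)).
  { unfold quad; simpl; repeat split; try lra. left; apply Rinv_0_lt_compat; auto. intro E; injection E; lra. }
  rewrite <- (Hhom y (/ y) 1 Hy Q), Rinv_r, Rmult_1_r by lra. auto.
Qed.

(* Only the term with [alpha + 2 = j + 1], i.e. [j = alpha + 1], survives in the expansion at infinity. *)
Lemma resonant_sum_d_alpha1 f (G : nat -> R -> C) alpha b N : 0 < b ->
  Re alpha + 2 < INR N + 1 ->
  (forall j, rderiv_n j (fun y => f 1 y) 0 = G j 0) ->
  Copp (csum N (fun j => if excluded_middle_informative (Cplus alpha (RtoC 2) = RtoC (INR (S j)))
                         then Cmult (G j 0) (RtoC (b ^ (S j) / INR (fact (S j)))) else RtoC 0))
  = Cmult (Copp (Cdiv (d_alpha1 f alpha) (Cplus alpha (RtoC 2)))) (cpow b (Cplus alpha (RtoC 2))).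
Proof.
  intros Hb HN Hrd. unfold d_alpha1.
  destruct (excluded_middle_informative (exists j, Cplus alpha (RtoC 1) = RtoC (INR j))) as [Hx|Hno].
  - destruct (constructive_indefinite_description _ Hx) as [j0 Hj0]. simpl.
    assert (Hgj : Cplus alpha (RtoC 2) = RtoC (INR (S j0))).
    { rewrite S_INR. transitivity (Cplus (Cplus alpha (RtoC 1)) (RtoC 1)).
      - apply C_ext; unfold Re, Im; simpl; ring.
      - rewrite Hj0. apply C_ext; unfold Re, Im; simpl; ring. }
    rewrite (csum_single N j0 _ (fun i => Cplus alpha (RtoC 2) = RtoC (INR (S i)))
               (fun i => excluded_middle_informative _)).
    2: { intros i Hi. rewrite Hgj in Hi. apply RtoC_INR_inj in Hi. lia. }
    destruct (excluded_middle_informative (Cplus alpha (RtoC 2) = RtoC (INR (S j0)))) as [_|C]; [|contradiction].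
    assert (Hlt : (j0 < N)%nat).
    { apply INR_lt. assert (Re (Cplus alpha (RtoC 1)) = INR j0) by (rewrite Hj0; auto).
      unfold Re at 1 in H; simpl in H. fold (Re alpha) in H. lra. }
    replace (Nat.ltb j0 N) with true by (symmetry; apply Nat.ltb_lt; auto).
    unfold dcoef. rewrite Hrd, Hgj, cpow_nat by auto.
    replace (INR (fact j0 + j0 * fact j0)) with (INR (S j0) * INR (fact j0)) by (rewrite <- mult_INR; auto).
    change (b * b ^ j0) with (b ^ S j0).
    pose proof (INR_fact_lt_0 j0). pose proof (pos_INR j0).
    assert (NZ1 : RtoC (INR (S j0)) <> RtoC 0).
    { assert (0 < INR (S j0)) by (apply lt_0_INR; lia). intro Z.
      assert (INR (S j0) = 0) by (change (Re (RtoC (INR (S j0))) = Re (RtoC 0)); rewrite Z; auto). lra. }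
    assert (NZ2 : RtoC (INR (fact j0)) <> RtoC 0) by (intro Z; injection Z; lra).
    unfold Rdiv. rewrite Rinv_mult, !RtoC_mult, !RtoC_inv by (try rewrite S_INR; lra).
    field. split; auto.
  - rewrite (csum_ext _ _ (fun _ => RtoC 0)).
    + rewrite csum_zero. unfold Cdiv. ring.
    + intros j _. destruct (excluded_middle_informative (Cplus alpha (RtoC 2) = RtoC (INR (S j)))) as [E|E]; auto.
      exfalso. apply Hno. exists j. rewrite S_INR in E.
      transitivity (Cplus (Cplus alpha (RtoC 2)) (RtoC (-1))).
      * apply C_ext; unfold Re, Im; simpl; ring.
      * rewrite E. apply C_ext; unfold Re, Im; simpl; ring.
Qed.

Theorem lemma3p1 (f : R -> R -> C) (alpha : C) :
  smooth_on quad f -> homogeneous alpha f ->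
  (* part 1 *)
  (Cplus alpha (RtoC 2) <> RtoC 0 -> forall b : R, 0 < b ->
     is_LIM (Rbar_locally p_infty)
       (fun z => Cmult (cpow z (Cplus alpha (RtoC 2))) (reg_int (fun y => f 1 y) (b / z)))
       (Cmult (Copp (Cdiv (d_alpha1 f alpha) (Cplus alpha (RtoC 2))))
              (cpow b (Cplus alpha (RtoC 2))))
     /\
     is_LIM (at_right 0)
       (fun z => Cmult (cpow z (Cplus alpha (RtoC 2))) (reg_int (fun y => f 1 y) (b / z)))
       (RtoC 0))
  /\
  (* part 2 *)
  (alpha = RtoC (-2) -> forall b : R, 0 < b ->
     is_LIM (at_right 0)
       (fun z => Cmult (RtoC (ln z)) (reg_int (fun y => f 1 y) (b / z))) (RtoC 0)
     /\
     is_LIM (Rbar_locally p_infty)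
       (fun z => Cmult (RtoC (ln z)) (reg_int (fun y => f 1 y) (b / z))) (RtoC 0)).
Proof.
  intros Hsm Hhom.
  destruct (smooth_quad_slices f Hsm) as (G & H & e & He & HG & HH & HfG & HfH).
  assert (HGH : forall y, 0 < y -> G O y = Cmult (cpow y alpha) (H O (/ y))).
  { intros y Hy. rewrite <- HfG by lra. rewrite (homogeneous_slice f alpha y Hhom Hy), HfH; auto.
    left; apply Rinv_0_lt_compat; auto. }
  assert (Hf : forall y, 0 < y -> f 1 y = G O y) by (intros; apply HfG; lra).
  assert (Hpinfty : Rbar_locally p_infty (fun z => 0 < z)) by (exists 0; auto).
  pose proof at_right_0_pos as H0.
  assert (FFi : Filter (Rbar_locally p_infty)) by apply Rbar_locally_filter.
  assert (FF0 : Filter (at_right 0)) by apply at_right_proper_filter.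
  split; intros Ha b Hb.
  - destruct (exists_nat_gt (Re alpha + 2)) as [N HN].
    split; apply (is_LIM_reg_int G H e alpha He HG HH HGH); auto.
    + assert (Hrd : forall j, rderiv_n j (fun y => f 1 y) 0 = G j 0)
        by (intros; apply (rderiv_n_slice _ G e); auto; lra).
      rewrite <- (resonant_sum_d_alpha1 f G alpha b N Hb ltac:(lra) Hrd).
      apply (reg_tail_pinfty G e alpha He HG b Hb N Ha). unfold Re at 1; simpl; fold (Re alpha); lra.
    + apply (reg_tail_0 G H e alpha He HG HH HGH b Hb N); auto. lra.
  - assert (Hre : Re alpha = -2) by (rewrite Ha; auto).
    split; apply (is_LIM_reg_int G H e alpha He HG HH HGH); auto.
    + apply (reg_tail_ln_0 G H e alpha He HG HH HGH b Hb O); auto. simpl. lra.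
    + apply (reg_tail_ln_pinfty G e He HG b Hb).
Qed.
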